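(* For every (probabilistically) guarded nondeterministic expression $E$ there is a guarded standard equation system $\mathcal S$, all of whose free variables lie in the set of free variables of $E$, such that $E$ satisfies $\mathcal S$.
   Context: Fix a set $\mathsf{Act}$ of actions containing $\tau$ and a set $\mathsf{Var}$ of variables. Nondeterministic expressions: $E ::= 0 \mid X \mid \alpha.P \mid \mathrm{rec}\,X.E \mid E + E$; probabilistic expressions: $P ::= \partial(E) \mid P \oplus_p P$ ($0<p<1$); $\bigoplus_{k}p_kE_k$ is an iterated $\oplus$ of $\partial(E_k)$ giving $E_k$ probability $p_k$. Subdistributions, Dirac $\delta$, operational semantics: least relations with $\partial(E)\mapsto\delta_E$; $P\oplus_pQ\mapsto p\mu+(1-p)\nu$ if $P\mapsto\mu,Q\mapsto\nu$; $\alpha.P\xrightarrow{\alpha}\mu$ if $P\mapsto\mu$; $\mathrm{rec}\,X.E\xrightarrow{\alpha}\mu$ if $E[\mathrm{rec}\,X.E/X]\xrightarrow{\alpha}\mu$; $E+F\xrightarrow{\alpha}\mu$ and $F+E\xrightarrow{\alpha}\mu$ if $E\xrightarrow{\alpha}\mu$. Probabilistic unguardedness $E\rhd V$ is the least relation with: $X\rhd\{X\}$; $\tau.P\rhd V$ if $P\rhd V$; $\mathrm{rec}\,Y.E\rhd V\setminus\{Y\}$ if $E\rhd V$ and $V\ne\{Y\}$; $E+F\rhd V$ if $E\rhd V$; $E+F\rhd W$ if $F\rhd W$; $\partial(E)\rhd V$ if $E\rhd V$; $P\oplus_pQ\rhd V\cup W$ if $P\rhd V$, $Q\rhd W$. An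 expression is guarded if for every subterm $\mathrm{rec}\,X.F$, not $F\rhd\{X\}$. Provable equality $=$: least equivalence and congruence on expressions, allowing renaming of bound variables, containing all instances of the axiom schemes N1–N4, P1–P3, T1–T4, C, R1, R3–R6 and closed under R2, namely: $E+F=F+E$; $E+(F+G)=(E+F)+G$; $E+E=E$; $E+0=E$; $P\oplus_pQ=Q\oplus_{1-p}P$; $P\oplus_p(Q\oplus_{q/(1-p)}R)=(P\oplus_{p/(p+q)}Q)\oplus_{p+q}R$; $P\oplus_pP=P$; $\alpha.(\partial(\tau.\partial(E))\oplus_pP)=\alpha.(\partial(E)\oplus_pP)$; $\tau.\bigoplus_ip_i(E_i+F)+F=\tau.\bigoplus_ip_i(E_i+F)$; $\tau.\bigoplus_ip_i(E_i+\alpha.P_i)+\alpha.\bigoplus_ip_iP_i=\tau.\bigoplus_ip_i(E_i+\alpha.P_i)$; $\alpha.\bigoplus_ip_i(E_i+\tau.P_i)+\alpha.\bigoplus_ip_iP_i=\alpha.\bigoplus_ip_i(E_i+\tau.P_i)$; $\alpha.P+\alpha.Q=\alpha.P+\alpha.(P\oplus_pQ)+\alpha.Q$; $\mathrm{rec}\,X.E=E[\mathrm{rec}\,X.E/X]$; (R2) if $F=E[F/X]$ and not $E\rhd\{X\}$ then $F=\mathrm{rec}\,X.E$; $\mathrm{rec}\,X.(\tau.(\partial(X+E)\oplus_pP)+F)=\mathrm{rec}\,X.(\tau.(\partial(X+E)\oplus_pP)+\tau.P+F)$; $\mathrm{rec}\,X.(X+E)=\mathrm{rec}\,X.E$; $\mathrm{rec}\,X.(\tau.\partial(X)+E)=\mathrm{rec}\,X.\tau.\partial(E)$;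 $\mathrm{rec}\,X.(\tau.\bigoplus_ip_i(X+E_i)+F)=\mathrm{rec}\,X.(\tau.\partial(X)+\sum_iE_i+F)$. An equation system $\mathcal S:\vec X=\vec S$ consists of distinct formal variables $\vec X=(X_1,\dots,X_n)$ and expressions $\vec S=(S_1,\dots,S_n)$; its free variables $\mathrm{Var}(\mathcal S)$ are the non-formal variables occurring in the $S_i$. It is standard if each $S_i$ has the form $\sum_j\alpha_{i,j}.\bigoplus_{k=1}^np_{i,j,k}X_k+\sum_jV_{i,j}$ with $V_{i,j}\in\mathrm{Var}(\mathcal S)$. $\mathcal S$ is satisfied by $E$ if there are expressions $E_1,\dots,E_n$ with $E$ syntactically equal to $E_1$ and $E_i=S_i[\vec E/\vec X]$ provable for all $i$. For a standard $\mathcal S$, define $X_i\xrightarrow{\alpha}_{\mathcal S}\mu$ (with $\mu$ a distribution over $\{X_1,\dots,X_n\}$) iff $S_i\xrightarrow{\alpha}\mu$; combined transitions, derivations and weak transitions $\Rightarrow_{\mathcal S}$, $\xRightarrow{\alpha}_{\mathcal S}$ are defined from this relation: combined transitions are the least relation with $\delta_{X_i}\xrightarrow{\alpha}\mu$ for $X_i\xrightarrow{\alpha}_{\mathcal S}\mu$ closed under sub-convex combinations; a derivation is $(\mu_i^{\to},\mu_i^{\times})_i$ with $\mu_i^{\to}\xrightarrow{\tau}\mu_{i+1}^{\to}+\mu_{i+1}^{\times}$; $\mu\Rightarrow_{\mathcal S}\nu$ iff some derivation has $\mu=\mu_0^\to+\mu_0^\times$ and $\nu=\sum_i\mu_i^\times$;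 $\xRightarrow{\alpha}_{\mathcal S}$ is $\Rightarrow_{\mathcal S}\xrightarrow{\alpha}\Rightarrow_{\mathcal S}$. A standard $\mathcal S$ is guarded if there is no $i$ with $\delta_{X_i}\xRightarrow{\tau}_{\mathcal S}\delta_{X_i}$. *)

From Stdlib Require Import Reals List Lra.
Import ListNotations.
Open Scope R_scope.

Set Implicit Arguments.

Section ProbCCS.

Context (L : Type).

Inductive act : Type := Tau | Vis (l : L).

(* Locally nameless syntax: free variables are names (nat), variables bound
   by rec are de Bruijn indices (NBV).  rec X.E is NRec E where X is NBV 0
   in E.  Probabilities are reals; well-formedness (0<p<1) is the predicate
   [probsN] below. *)
Inductive nexp : Type :=
| NNil : nexp
| NFV : nat -> nexp
| NBV : nat -> nexp
| NPre : act -> pexp -> nexp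
| NRec : nexp -> nexp
| NSum : nexp -> nexp -> nexp
with pexp : Type :=
| PDirac : nexp -> pexp
| POplus : R -> pexp -> pexp -> pexp.

Fixpoint openN (k : nat) (u : nexp) (E : nexp) : nexp :=
  match E with
  | NNil => NNil
  | NFV x => NFV x
  | NBV n => if Nat.eqb n k then u else NBV n
  | NPre a P => NPre a (openP k u P)
  | NRec F => NRec (openN (S k) u F)
  | NSum F G => NSum (openN k u F) (openN k u G)
  end
with openP (k : nat) (u : nexp) (P : pexp) : pexp :=
  match P with
  | PDirac F => PDirac (openN k u F)
  | POplus p P Q => POplus p (openP k u P) (openP k u Q)
  end.

(* E[u/X] for a body E of rec X.E *)
Definition open (E u : nexp) : nexp := openN 0%nat u E.

Fixpoint lcN (k : nat) (E : nexp) : Prop :=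
  match E with
  | NNil => True
  | NFV _ => True
  | NBV n => (n < k)%nat
  | NPre _ P => lcP k P
  | NRec F => lcN (S k) F
  | NSum F G => lcN k F /\ lcN k G
  end
with lcP (k : nat) (P : pexp) : Prop :=
  match P with
  | PDirac F => lcN k F
  | POplus _ P Q => lcP k P /\ lcP k Q
  end.

Fixpoint probsN (E : nexp) : Prop :=
  match E with
  | NNil | NFV _ | NBV _ => True
  | NPre _ P => probsP P
  | NRec F => probsN F
  | NSum F G => probsN F /\ probsN G
  end
with probsP (P : pexp) : Prop :=
  match P with
  | PDirac F => probsN F
  | POplus p P Q => (0 < p < 1) /\ probsP P /\ probsP Q
  end.

Definition expr (E : nexp) : Prop := lcN 0%nat E /\ probsN E.

Fixpoint fvN (E : nexp) : list nat :=
  match E with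
  | NNil | NBV _ => []
  | NFV x => [x]
  | NPre _ P => fvP P
  | NRec F => fvN F
  | NSum F G => fvN F ++ fvN G
  end
with fvP (P : pexp) : list nat :=
  match P with
  | PDirac F => fvN F
  | POplus _ P Q => fvP P ++ fvP Q
  end.

Fixpoint fsubstN (s : nat -> nexp) (E : nexp) : nexp :=
  match E with
  | NNil => NNil
  | NFV x => s x
  | NBV n => NBV n
  | NPre a P => NPre a (fsubstP s P)
  | NRec F => NRec (fsubstN s F)
  | NSum F G => NSum (fsubstN s F) (fsubstN s G)
  end
with fsubstP (s : nat -> nexp) (P : pexp) : pexp :=
  match P with
  | PDirac F => PDirac (fsubstN s F)
  | POplus p P Q => POplus p (fsubstP s P) (fsubstP s Q)
  end.

(* variables: inl n = bound index n, inr x = free name x *)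
Definition var := (nat + nat)%type.

Definition unshift (V : list var) : list var :=
  flat_map (fun v => match v with
                     | inl O => []
                     | inl (S n) => [inl n]
                     | inr x => [inr x]
                     end) V.

Definition seteq (V W : list var) : Prop := forall v, In v V <-> In v W.

Inductive UGN : nexp -> list var -> Prop :=
| ug_fv x : UGN (NFV x) [inr x]
| ug_bv n : UGN (NBV n) [inl n]
| ug_tau P V : UGP P V -> UGN (NPre Tau P) V
| ug_rec E V : UGN E V -> ~ seteq V [inl 0%nat] -> UGN (NRec E) (unshift V)
| ug_suml E F V : UGN E V -> UGN (NSum E F) V
| ug_sumr E F W : UGN F W -> UGN (NSum E F) W
with UGP : pexp -> list var -> Prop :=
| ug_dirac E V : UGN E V -> UGP (PDirac E) V
| ug_oplus p P Q V W : UGP P V -> UGP Q W -> UGP (POplus p P Q) (V ++ W).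

Definition unguarded_in (E : nexp) (v : var) : Prop :=
  exists V, UGN E V /\ seteq V [v].

Fixpoint guardedN (E : nexp) : Prop :=
  match E with
  | NNil | NFV _ | NBV _ => True
  | NPre _ P => guardedP P
  | NRec F => ~ unguarded_in F (inl 0%nat) /\ guardedN F
  | NSum F G => guardedN F /\ guardedN G
  end
with guardedP (P : pexp) : Prop :=
  match P with
  | PDirac F => guardedN F
  | POplus _ P Q => guardedP P /\ guardedP Q
  end.

(* oplusL [(p1,P1);...;(pk,Pk)] = P1 (+)_{p1} (P2 (+)_{p2/(1-p1)} ( ... Pk)) *)
Fixpoint oplusAux (s : R) (l : list (R * pexp)) : pexp :=
  match l with
  | [] => PDirac NNil
  | [(_, P)] => P
  | (p, P) :: l' => POplus (p / s) P (oplusAux (s - p) l')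
  end.

Definition oplusL (l : list (R * pexp)) : pexp := oplusAux 1 l.

Definition validW (ws : list R) : Prop :=
  ws <> [] /\ Forall (fun p => 0 < p) ws /\ fold_right Rplus 0 ws = 1.

Fixpoint sumL (l : list nexp) : nexp :=
  match l with
  | [] => NNil
  | [E] => E
  | E :: l' => NSum E (sumL l')
  end.

Inductive eqN : nexp -> nexp -> Prop :=
| eqN_refl E : eqN E E
| eqN_sym E F : eqN E F -> eqN F E
| eqN_trans E F G : eqN E F -> eqN F G -> eqN E G
| eqN_pre a P Q : eqP P Q -> eqN (NPre a P) (NPre a Q)
| eqN_sum E E' F F' : eqN E E' -> eqN F F' -> eqN (NSum E F) (NSum E' F')
| eqN_rec E F x : ~ In x (fvN E ++ fvN F) ->
    eqN (open E (NFV x)) (open F (NFV x)) -> eqN (NRec E) (NRec F)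
| ax_N1 E F : eqN (NSum E F) (NSum F E)
| ax_N2 E F G : eqN (NSum E (NSum F G)) (NSum (NSum E F) G)
| ax_N3 E : eqN (NSum E E) E
| ax_N4 E : eqN (NSum E NNil) E
| ax_T1 a p E P : 0 < p < 1 ->
    eqN (NPre a (POplus p (PDirac (NPre Tau (PDirac E))) P))
        (NPre a (POplus p (PDirac E) P))
| ax_T2 (l : list (R * nexp)) F : validW (map fst l) ->
    eqN (NSum (NPre Tau (oplusL (map (fun pe => (fst pe, PDirac (NSum (snd pe) F))) l))) F)
        (NPre Tau (oplusL (map (fun pe => (fst pe, PDirac (NSum (snd pe) F))) l)))
| ax_T3 (l : list (R * nexp * pexp)) a : validW (map (fun t => fst (fst t)) l) ->
    eqN (NSum (NPre Tau (oplusL (map (fun t =>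
                 (fst (fst t), PDirac (NSum (snd (fst t)) (NPre a (snd t))))) l)))
              (NPre a (oplusL (map (fun t => (fst (fst t), snd t)) l))))
        (NPre Tau (oplusL (map (fun t =>
                 (fst (fst t), PDirac (NSum (snd (fst t)) (NPre a (snd t))))) l)))
| ax_T4 (l : list (R * nexp * pexp)) a : validW (map (fun t => fst (fst t)) l) ->
    eqN (NSum (NPre a (oplusL (map (fun t =>
                 (fst (fst t), PDirac (NSum (snd (fst t)) (NPre Tau (snd t))))) l)))
              (NPre a (oplusL (map (fun t => (fst (fst t), snd t)) l))))
        (NPre a (oplusL (map (fun t =>
                 (fst (fst t), PDirac (NSum (snd (fst t)) (NPre Tau (snd t))))) l)))
| ax_C a p P Q : 0 < p < 1 ->
    eqN (NSum (NPre a P) (NPre a Q))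
        (NSum (NSum (NPre a P) (NPre a (POplus p P Q))) (NPre a Q))
| ax_R1 E : lcN 0%nat (NRec E) -> eqN (NRec E) (open E (NRec E))
| ax_R2 E F : lcN 0%nat F -> lcN 1%nat E -> eqN F (open E F) ->
    ~ unguarded_in E (inl 0%nat) -> eqN F (NRec E)
| ax_R3 E : eqN (NRec (NSum (NBV 0%nat) E)) (NRec E)
| ax_R4 p E P F : 0 < p < 1 ->
    eqN (NRec (NSum (NPre Tau (POplus p (PDirac (NSum (NBV 0%nat) E)) P)) F))
        (NRec (NSum (NSum (NPre Tau (POplus p (PDirac (NSum (NBV 0%nat) E)) P))
                          (NPre Tau P)) F))
| ax_R5 E : eqN (NRec (NSum (NPre Tau (PDirac (NBV 0%nat))) E))
                (NRec (NPre Tau (PDirac E)))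
| ax_R6 (l : list (R * nexp)) F : validW (map fst l) ->
    eqN (NRec (NSum (NPre Tau (oplusL (map (fun pe =>
                     (fst pe, PDirac (NSum (NBV 0%nat) (snd pe)))) l))) F))
        (NRec (NSum (NSum (NPre Tau (PDirac (NBV 0%nat))) (sumL (map snd l))) F))
with eqP : pexp -> pexp -> Prop :=
| eqP_refl P : eqP P P
| eqP_sym P Q : eqP P Q -> eqP Q P
| eqP_trans P Q R' : eqP P Q -> eqP Q R' -> eqP P R'
| eqP_dirac E F : eqN E F -> eqP (PDirac E) (PDirac F)
| eqP_oplus p P P' Q Q' : eqP P P' -> eqP Q Q' -> eqP (POplus p P Q) (POplus p P' Q')
| ax_P1 p P Q : 0 < p < 1 -> eqP (POplus p P Q) (POplus (1 - p) Q P)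
| ax_P2 p q P Q R' : 0 < p -> 0 < q -> p + q < 1 ->
    eqP (POplus p P (POplus (q / (1 - p)) Q R'))
        (POplus (p + q) (POplus (p / (p + q)) P Q) R')
| ax_P3 p P : 0 < p < 1 -> eqP (POplus p P P) P.

Inductive pmap : pexp -> (nexp -> R) -> Prop :=
| pm_dirac E (mu : nexp -> R) : mu E = 1 -> (forall F, F <> E -> mu F = 0) ->
    pmap (PDirac E) mu
| pm_oplus p P Q mu nu : pmap P mu -> pmap Q nu ->
    pmap (POplus p P Q) (fun F => p * mu F + (1 - p) * nu F).

Inductive step : nexp -> act -> (nexp -> R) -> Prop :=
| st_pre a P mu : pmap P mu -> step (NPre a P) a mu
| st_rec E a mu : step (open E (NRec E)) a mu -> step (NRec E) a mu
| st_suml E F a mu : step E a mu -> step (NSum E F) a mu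
| st_sumr E F a mu : step F a mu -> step (NSum E F) a mu.

Record eqsys : Type := EqSys { formals : list nat; rhs : list nexp }.

Definition sys_wf (sy : eqsys) : Prop :=
  NoDup (formals sy) /\ length (formals sy) = length (rhs sy) /\
  formals sy <> [] /\ Forall expr (rhs sy).

Definition sysVar (sy : eqsys) (v : nat) : Prop :=
  In v (flat_map fvN (rhs sy)) /\ ~ In v (formals sy).

Fixpoint stdP (Xs : list nat) (P : pexp) : Prop :=
  match P with
  | PDirac (NFV x) => In x Xs
  | PDirac _ => False
  | POplus _ P Q => stdP Xs P /\ stdP Xs Q
  end.

Fixpoint leavesP (P : pexp) : list nat :=
  match P with
  | PDirac (NFV x) => [x]
  | PDirac _ => []
  | POplus _ P Q => leavesP P ++ leavesP Q
  end.

Fixpoint stdTerms (Xs : list nat) (E : nexp) : Prop :=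
  match E with
  | NPre _ P => stdP Xs P /\ NoDup (leavesP P)
  | NFV v => ~ In v Xs
  | NSum E F => stdTerms Xs E /\ stdTerms Xs F
  | _ => False
  end.

Definition stdRhs (Xs : list nat) (E : nexp) : Prop := E = NNil \/ stdTerms Xs E.

Definition standard (sy : eqsys) : Prop := Forall (stdRhs (formals sy)) (rhs sy).

Fixpoint lookup (Xs : list nat) (Es : list nexp) (x : nat) : nexp :=
  match Xs, Es with
  | y :: Xs', F :: Es' => if Nat.eqb x y then F else lookup Xs' Es' x
  | _, _ => NFV x
  end.

Definition satisfies (E : nexp) (sy : eqsys) : Prop :=
  exists Es : list nexp,
    length Es = length (formals sy) /\ Forall expr Es /\ nth 0%nat Es NNil = E /\
    forall i, (i < length (formals sy))%nat ->
      eqN (nth i Es NNil) (fsubstN (lookup (formals sy) Es) (nth i (rhs sy) NNil)).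

(* subdistributions over the formal variables (names) *)
Definition dist := nat -> R.
Definition diracN (x : nat) : dist := fun y => if Nat.eqb y x then 1 else 0.
Definition zeroD : dist := fun _ => 0.
Definition liftD (nu : dist) : nexp -> R :=
  fun F => match F with NFV y => nu y | _ => 0 end.

Definition sys_trans (sy : eqsys) (x : nat) (a : act) (nu : dist) : Prop :=
  exists i, (i < length (formals sy))%nat /\ nth i (formals sy) 0%nat = x /\
    (forall y, nu y <> 0 -> In y (formals sy)) /\
    exists mu, step (nth i (rhs sy) NNil) a mu /\ forall F, mu F = liftD nu F.

Inductive ctrans (sy : eqsys) (a : act) : dist -> dist -> Prop :=
| ct_base x nu : sys_trans sy x a nu -> ctrans sy a (diracN x) nu
| ct_zero : ctrans sy a zeroD zeroD
| ct_comb c1 c2 m1 n1 m2 n2 : 0 <= c1 -> 0 <= c2 -> c1 + c2 <= 1 ->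
    ctrans sy a m1 n1 -> ctrans sy a m2 n2 ->
    ctrans sy a (fun x => c1 * m1 x + c2 * m2 x) (fun x => c1 * n1 x + c2 * n2 x).

(* weak transition mu ==> nu via a derivation (mu_i^->, mu_i^x)_i *)
Definition weak (sy : eqsys) (mu nu : dist) : Prop :=
  exists mto mx : nat -> dist,
    (forall i x, 0 <= mto i x /\ 0 <= mx i x) /\
    (forall i, ctrans sy Tau (mto i) (fun x => mto (S i) x + mx (S i) x)) /\
    (forall x, mu x = mto 0%nat x + mx 0%nat x) /\
    (forall x, infinite_sum (fun i => mx i x) (nu x)).

Definition weak_tr (sy : eqsys) (a : act) (mu nu : dist) : Prop :=
  exists m1 m2, weak sy mu m1 /\ ctrans sy a m1 m2 /\ weak sy m2 nu.

Definition sys_guarded (sy : eqsys) : Prop :=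
  forall x, In x (formals sy) -> ~ weak_tr sy Tau (diracN x) (diracN x).

End ProbCCS.

From Pilot Require Import Defs.
From Stdlib Require Import Reals List Lia Lra Classical.
Import ListNotations.
Local Open Scope nat_scope.

(* By induction on [E] we build equations [X_i = S_i] in standard form over fresh
   formals, together with expressions [E_i] solving them, [E] solving the first;
   prefixes, sums and probabilistic choices combine the equations of their parts.
   For [rec X.B], the fresh name [x] standing for [X] in the equations of [B[x/X]]
   is eliminated by substituting the first right-hand side for it: guardedness of
   [B] means that [x] is not a summand there, so the equations stay standard, and
   by R1 [rec X.B] and the substituted solutions solve them.
   A silent loop [delta_X ==tau==> delta_X] of a standard system yields a nonempty
   set of formals, each with a tau-summand leading back into the set.  The
   construction excludes such sets, since whenever [X_1] reaches variables [V]
   silently, [E |> W] for some [W] among [V]; at a [rec] this would give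
   [B |> {X}]. *)

Scheme nexp_mind := Induction for nexp Sort Prop
  with pexp_mind := Induction for pexp Sort Prop.
Combined Scheme nexp_pexp_mind from nexp_mind, pexp_mind.

Scheme UGN_mind := Induction for UGN Sort Prop
  with UGP_mind := Induction for UGP Sort Prop.
Combined Scheme UG_mind from UGN_mind, UGP_mind.

Arguments NNil {L}.
Arguments NFV {L} _.
Arguments NBV {L} _.
Arguments Tau {L}.

Section Expressions.
Context {L : Type}.
Notation nexp := (nexp L).
Notation pexp := (pexp L).
(* An entry [((Y, S), E)] is the equation [Y = S] of a system together with the
   expression [E] that solves it. *)
Notation entry := (nat * nexp * nexp)%type.

Section Syntax.

Fixpoint sizeN (E : nexp) : nat :=
  match E with
  | NNil | NFV _ | NBV _ => 1
  | NPre _ P => S (sizeP P)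
  | NRec F => S (sizeN F)
  | NSum F G => S (sizeN F + sizeN G)
  end
with sizeP (P : pexp) : nat :=
  match P with
  | PDirac F => S (sizeN F)
  | POplus _ P Q => S (sizeP P + sizeP Q)
  end.

Lemma open_size x :
  (forall (E : nexp) k, sizeN (openN k (NFV x) E) = sizeN E) /\
  (forall (P : pexp) k, sizeP (openP k (NFV x) P) = sizeP P).
Proof.
  apply nexp_pexp_mind; intros; simpl; auto.
  destruct (Nat.eqb n k); reflexivity.
Qed.

Lemma lc_weaken :
  (forall (E : nexp) k k', lcN k E -> k <= k' -> lcN k' E) /\
  (forall (P : pexp) k k', lcP k P -> k <= k' -> lcP k' P).
Proof.
  apply nexp_pexp_mind; simpl; intros; try tauto; try lia; eauto with arith.
  all: destruct H1; eauto.
Qed.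

Lemma open_lc_id u :
  (forall (E : nexp) k, lcN k E -> openN k u E = E) /\
  (forall (P : pexp) k, lcP k P -> openP k u P = P).
Proof.
  apply nexp_pexp_mind; simpl; intros; try destruct H1; f_equal; auto.
  destruct (Nat.eqb_spec n k); [lia|auto].
Qed.

Lemma lc_open u : lcN 0 u ->
  (forall (E : nexp) k, lcN (S k) E -> lcN k (openN k u E)) /\
  (forall (P : pexp) k, lcP (S k) P -> lcP k (openP k u P)).
Proof.
  intro Hu. apply nexp_pexp_mind; simpl; intros; try destruct H1; try split; auto.
  destruct (Nat.eqb_spec n k).
  - apply (proj1 lc_weaken) with 0; auto; lia.
  - simpl; lia.
Qed.

Lemma probs_open u : probsN u ->
  (forall (E : nexp) k, probsN E -> probsN (openN k u E)) /\
  (forall (P : pexp) k, probsP P -> probsP (openP k u P)).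
Proof.
  intro Hu. apply nexp_pexp_mind; simpl; intros; try firstorder.
  destruct (Nat.eqb n k); simpl; auto.
Qed.

Lemma fv_open u :
  (forall (E : nexp) k v, In v (fvN (openN k u E)) -> In v (fvN E) \/ In v (fvN u)) /\
  (forall (P : pexp) k v, In v (fvP (openP k u P)) -> In v (fvP P) \/ In v (fvN u)).
Proof.
  apply nexp_pexp_mind; simpl; intros; eauto.
  1: destruct (Nat.eqb n k); simpl in *; tauto.
  all: rewrite in_app_iff in *; firstorder.
Qed.

Lemma fsubst_ext :
  (forall (E : nexp) s s', (forall v, In v (fvN E) -> s v = s' v) ->
     fsubstN s E = fsubstN s' E) /\
  (forall (P : pexp) s s', (forall v, In v (fvP P) -> s v = s' v) ->
     fsubstP s P = fsubstP s' P).
Proof.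
  apply nexp_pexp_mind; simpl; intros; f_equal; auto with datatypes.
Qed.

Lemma fsubst_comp :
  (forall (E : nexp) s t, fsubstN t (fsubstN s E) = fsubstN (fun v => fsubstN t (s v)) E) /\
  (forall (P : pexp) s t, fsubstP t (fsubstP s P) = fsubstP (fun v => fsubstN t (s v)) P).
Proof. apply nexp_pexp_mind; simpl; intros; f_equal; auto. Qed.

Lemma fsubst_id :
  (forall E : nexp, fsubstN NFV E = E) /\ (forall P : pexp, fsubstP NFV P = P).
Proof. apply nexp_pexp_mind; simpl; intros; f_equal; auto. Qed.

Definition lc_subst (s : nat -> nexp) : Prop := forall v, lcN 0 (s v).

Lemma lc_fsubst s : lc_subst s ->
  (forall (E : nexp) k, lcN k E -> lcN k (fsubstN s E)) /\
  (forall (P : pexp) k, lcP k P -> lcP k (fsubstP s P)).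
Proof.
  intro Hs. apply nexp_pexp_mind; simpl; intros; try firstorder.
  apply (proj1 lc_weaken) with 0; auto; lia.
Qed.

Lemma probs_fsubst s : (forall v, probsN (s v)) ->
  (forall E : nexp, probsN E -> probsN (fsubstN s E)) /\
  (forall P : pexp, probsP P -> probsP (fsubstP s P)).
Proof. intro Hs. apply nexp_pexp_mind; simpl; intros; firstorder. Qed.

Lemma fv_fsubst s :
  (forall (E : nexp) v, In v (fvN (fsubstN s E)) ->
     exists u, In u (fvN E) /\ In v (fvN (s u))) /\
  (forall (P : pexp) v, In v (fvP (fsubstP s P)) ->
     exists u, In u (fvP P) /\ In v (fvN (s u))).
Proof.
  apply nexp_pexp_mind; simpl; intros; try tauto; eauto.
  all: rewrite in_app_iff in H1; destruct H1 as [H1|H1];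
       [destruct (H _ H1) as [u [? ?]]|destruct (H0 _ H1) as [u [? ?]]];
       exists u; rewrite in_app_iff; auto.
Qed.

Lemma fsubst_open s : lc_subst s ->
  (forall (E : nexp) k u, fsubstN s (openN k u E) = openN k (fsubstN s u) (fsubstN s E)) /\
  (forall (P : pexp) k u, fsubstP s (openP k u P) = openP k (fsubstN s u) (fsubstP s P)).
Proof.
  intro Hs. apply nexp_pexp_mind; simpl; intros; try solve [f_equal; auto].
  - rewrite (proj1 (open_lc_id _)); auto.
    apply (proj1 lc_weaken) with 0; auto; lia.
  - destruct (Nat.eqb n k); reflexivity.
Qed.

End Syntax.

Section Unguardedness.

(* How opening index [k] with the name [x] acts on the variables of [E |> V]. *)
Definition ren (k x : nat) (v : var) : var :=
  match v with inl n => if Nat.eqb n k then inr x else inl n | inr y => inr y end.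

Lemma unshift_cons a V : unshift (a :: V) =
  (match a with inl O => [] | inl (S n) => [inl n] | inr x => [inr x] end) ++ unshift V.
Proof. reflexivity. Qed.

Lemma unshift_map_ren k x V :
  unshift (map (ren (S k) x) V) = map (ren k x) (unshift V).
Proof.
  induction V as [|a V IH]; [reflexivity|].
  simpl map. rewrite !unshift_cons, map_app, IH. f_equal.
  destruct a as [[|n]|y]; simpl; auto.
  destruct (Nat.eqb n k); reflexivity.
Qed.

Lemma in_unshift v V : In v (unshift V) ->
  (exists n, v = inl n /\ In (inl (S n)) V) \/ (exists y, v = inr y /\ In (inr y) V).
Proof.
  induction V as [|a V IH]; [simpl; tauto|].
  rewrite unshift_cons, in_app_iff. intros [H|H].
  - destruct a as [[|n]|y]; simpl in H; [tauto| |];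
      destruct H as [<-|[]]; [left; exists n|right; exists y]; simpl; auto.
  - destruct (IH H) as [[n [? ?]]|[y [? ?]]]; [left; exists n|right; exists y]; simpl; auto.
Qed.

Lemma unshift_nil V : unshift V = [] -> forall v, In v V -> v = inl 0.
Proof.
  induction V as [|a V IH]; [simpl; tauto|].
  rewrite unshift_cons. intros H v [<-|Hv].
  - destruct a as [[|n]|y]; simpl in H; congruence.
  - apply IH; auto. apply app_eq_nil in H; tauto.
Qed.

Lemma seteq_map (f : var -> var) {V v} : seteq V [v] -> seteq (map f V) [f v].
Proof.
  intros Hs w; rewrite in_map_iff; split.
  - intros [u [<- Hu]]. apply Hs in Hu. destruct Hu as [<-|[]]; simpl; auto.
  - intros [<-|[]]. exists v; split; auto. apply Hs; simpl; auto.
Qed.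

Lemma seteq_map_inv (f : var -> var) {V v} : (forall w, f w = f v -> w = v) ->
  seteq (map f V) [f v] -> seteq V [v].
Proof.
  intros Hf Hs w; split.
  - intro Hw. apply (in_map f), Hs in Hw. destruct Hw as [Hw|[]]. rewrite (Hf w); simpl; auto.
  - intros [<-|[]]. assert (Hv : In (f v) (map f V)) by (apply Hs; simpl; auto).
    apply in_map_iff in Hv. destruct Hv as [u [Hu ?]]. rewrite <- (Hf u Hu). auto.
Qed.

Lemma ren_S_inl0 k x w : ren (S k) x w = ren (S k) x (inl 0) -> w = inl 0.
Proof. destruct w as [n|y]; simpl; [destruct (Nat.eqb n (S k))|]; congruence. Qed.

Lemma UG_open_inv x :
  (forall (E : nexp) W, UGN E W -> forall B k, E = openN k (NFV x) B -> ~ In x (fvN B) ->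
     exists W', UGN B W' /\ W = map (ren k x) W') /\
  (forall (P : pexp) W, UGP P W -> forall B k, P = openP k (NFV x) B -> ~ In x (fvP B) ->
     exists W', UGP B W' /\ W = map (ren k x) W').
Proof.
  apply (UG_mind L
    (fun E W _ => forall B k, E = openN k (NFV x) B -> ~ In x (fvN B) ->
       exists W', UGN B W' /\ W = map (ren k x) W')
    (fun P W _ => forall B k, P = openP k (NFV x) B -> ~ In x (fvP B) ->
       exists W', UGP B W' /\ W = map (ren k x) W'));
    intros; destruct B; simpl in *; try discriminate;
    try (match goal with H : context [Nat.eqb ?a ?b] |- _ => destruct (Nat.eqb a b) end;
         discriminate);
    try match goal with H : _ = _ |- _ => injection H; clear H; intros; subst end.
  - exists [inr n]; split; [constructor|reflexivity].
  - destruct (Nat.eqb_spec n k); [|discriminate]. injection H; intros; subst.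
    exists [inl k]; split; [constructor|]. simpl. rewrite Nat.eqb_refl. reflexivity.
  - destruct (Nat.eqb_spec n0 k); [discriminate|]. injection H; intros; subst.
    exists [inl n0]; split; [constructor|]. simpl.
    destruct (Nat.eqb_spec n0 k); [contradiction|reflexivity].
  - destruct (H p k eq_refl H1) as [W' [? ->]]. exists W'; split; auto. constructor; auto.
  - destruct (H B (S k) eq_refl H1) as [W' [? ->]].
    exists (unshift W'); split; [|apply unshift_map_ren].
    constructor; auto. intro Hs. apply n. apply (seteq_map (ren (S k) x) Hs).
  - destruct (H B1 k eq_refl) as [W' [? ->]]; [rewrite in_app_iff in H1; tauto|].
    exists W'; split; auto. constructor; auto.
  - destruct (H B2 k eq_refl) as [W' [? ->]]; [rewrite in_app_iff in H1; tauto|].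
    exists W'; split; auto. apply ug_sumr; auto.
  - destruct (H n k eq_refl H1) as [W' [? ->]]. exists W'; split; auto. constructor; auto.
  - rewrite in_app_iff in H2.
    destruct (H B1 k eq_refl) as [W1 [? ->]]; [tauto|].
    destruct (H0 B2 k eq_refl) as [W2 [? ->]]; [tauto|].
    exists (W1 ++ W2); split; [constructor; auto|]. rewrite map_app; auto.
Qed.

Lemma UG_fv :
  (forall (E : nexp) W, UGN E W -> forall y, In (inr y) W -> In y (fvN E)) /\
  (forall (P : pexp) W, UGP P W -> forall y, In (inr y) W -> In y (fvP P)).
Proof.
  apply (UG_mind L (fun E W _ => forall y, In (inr y) W -> In y (fvN E))
                 (fun P W _ => forall y, In (inr y) W -> In y (fvP P)));
    simpl; intros; rewrite ?in_app_iff in *; auto.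
  - destruct H as [H|[]]; injection H; auto.
  - destruct H as [H|[]]; discriminate.
  - apply in_unshift in H0. destruct H0 as [[m [? ?]]|[z [Hz ?]]]; [discriminate|].
    injection Hz; intros; subst; auto.
  - destruct H1; auto.
Qed.

Lemma UG_nonempty :
  (forall (E : nexp) W, UGN E W -> W <> []) /\
  (forall (P : pexp) W, UGP P W -> W <> []).
Proof.
  apply (UG_mind L (fun E W _ => W <> []) (fun P W _ => W <> [])); intros;
    try discriminate; auto.
  - intro Hn. apply n. intro v. split; intro Hv.
    + rewrite (unshift_nil _ Hn _ Hv); simpl; auto.
    + destruct Hv as [<-|[]]. destruct V as [|a V]; [contradiction|].
      rewrite <- (unshift_nil _ Hn a); simpl; auto.
  - intro Hn. apply app_eq_nil in Hn. tauto.
Qed.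

Lemma not_unguarded_open (C : nexp) k x : ~ In x (fvN C) ->
  ~ unguarded_in C (inl 0) -> ~ unguarded_in (openN (S k) (NFV x) C) (inl 0).
Proof.
  intros Hx Hu [W [HW Hs]]. apply Hu.
  destruct (proj1 (UG_open_inv x) _ _ HW C (S k) eq_refl Hx) as [W' [HW' ->]].
  exists W'; split; auto.
  apply (seteq_map_inv (ren (S k) x)); [apply ren_S_inl0|exact Hs].
Qed.

Lemma guarded_open x :
  (forall (E : nexp) k, guardedN E -> ~ In x (fvN E) -> guardedN (openN k (NFV x) E)) /\
  (forall (P : pexp) k, guardedP P -> ~ In x (fvP P) -> guardedP (openP k (NFV x) P)).
Proof.
  apply nexp_pexp_mind; simpl; intros; rewrite ?in_app_iff in *; auto.
  - destruct (Nat.eqb n k); simpl; auto.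
  - destruct H0; split; auto. apply not_unguarded_open; auto.
  - destruct H1; split; auto.
  - destruct H1; split; auto.
Qed.

(* Guardedness of [B] lets the [rec] rule of [|>] apply, and that rule drops [x]. *)
Lemma rec_unguarded (B : nexp) x {V W} : ~ unguarded_in B (inl 0) -> ~ In x (fvN B) ->
  UGN (open B (NFV x)) W -> incl W (map inr (x :: V)) ->
  exists W', UGN (NRec B) W' /\ incl W' (map inr V).
Proof.
  intros Hg Hx HW HWV.
  destruct (proj1 (UG_open_inv x) _ _ HW B 0 eq_refl Hx) as [W' [HW' ->]].
  exists (unshift W'); split.
  - constructor; auto. intro Hs. apply Hg. exists W'; auto.
  - intros w Hw. apply in_unshift in Hw. destruct Hw as [[n [-> Hn]]|[y [-> Hy]]].
    + apply (in_map (ren 0 x)), HWV, in_map_iff in Hn. destruct Hn as [v [Hv _]].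
      discriminate.
    + pose proof (HWV _ (in_map (ren 0 x) _ _ Hy)) as Hv. apply in_map_iff in Hv.
      destruct Hv as [v [Hv [->|Hin]]]; simpl in Hv; injection Hv as ->.
      * exfalso. apply Hx. apply (proj1 UG_fv) with W'; auto.
      * apply in_map; auto.
Qed.

Lemma rec_not_unguarded_in_fresh (B : nexp) x W :
  ~ unguarded_in B (inl 0) -> ~ In x (fvN B) ->
  UGN (open B (NFV x)) W -> ~ incl W [inr x].
Proof.
  intros Hg Hx HW HWx.
  destruct (rec_unguarded B x (V := []) Hg Hx HW HWx) as [[|w W'] [HW' HV']].
  - exact (proj1 UG_nonempty _ _ HW' eq_refl).
  - destruct (HV' w (or_introl eq_refl)).
Qed.

End Unguardedness.

Section Summands.

Fixpoint summand (t s : nexp) : Prop :=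
  match t with
  | NNil => False
  | NSum a b => summand a s \/ summand b s
  | _ => s = t
  end.

(* Like [stdRhs], except that [0] may occur anywhere in the sum. *)
Fixpoint std_sum (Xs : list nat) (t : nexp) : Prop :=
  match t with
  | NNil => True
  | NSum a b => std_sum Xs a /\ std_sum Xs b
  | NPre _ P => stdP Xs P /\ NoDup (leavesP P)
  | NFV v => ~ In v Xs
  | _ => False
  end.

Definition nsum (a b : nexp) : nexp :=
  match a, b with
  | NNil, _ => b
  | _, NNil => a
  | _, _ => NSum a b
  end.

Fixpoint prune (t : nexp) : nexp :=
  match t with
  | NSum a b => nsum (prune a) (prune b)
  | _ => t
  end.

Lemma stdRhs_std_sum {Xs} {t : nexp} : stdRhs Xs t -> std_sum Xs t.
Proof.
  intros [->|H]; simpl; auto.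
  induction t; simpl in *; tauto.
Qed.

Lemma nsum_std {Xs} {a b : nexp} : stdRhs Xs a -> stdRhs Xs b -> stdRhs Xs (nsum a b).
Proof.
  intros [->|Ha] Hb; [exact Hb|right].
  destruct Hb as [->|Hb]; destruct a; simpl in *; try tauto; destruct b; simpl in *; tauto.
Qed.

Lemma prune_std {Xs} {t : nexp} : std_sum Xs t -> stdRhs Xs (prune t).
Proof.
  induction t; simpl; intros; try tauto.
  - left; auto.
  - right; simpl; auto.
  - right; simpl; auto.
  - apply nsum_std; tauto.
Qed.

Lemma summand_nsum (a b s : nexp) : summand (nsum a b) s <-> summand a s \/ summand b s.
Proof. destruct a, b; simpl; tauto. Qed.

Lemma summand_prune (t s : nexp) : summand (prune t) s <-> summand t s.
Proof. induction t; simpl; try tauto. rewrite summand_nsum. tauto. Qed.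

Lemma eqN_nsum s (a b : nexp) :
  eqN (NSum (fsubstN s a) (fsubstN s b)) (fsubstN s (nsum a b)).
Proof.
  destruct a, b; simpl; try apply eqN_refl; try apply ax_N4;
    eapply eqN_trans; apply ax_N1 || apply ax_N4.
Qed.

Lemma eqN_prune s (t : nexp) : eqN (fsubstN s t) (fsubstN s (prune t)).
Proof.
  induction t; simpl; try apply eqN_refl.
  eapply eqN_trans; [apply eqN_sum; eauto|apply eqN_nsum].
Qed.

Lemma prune_expr (t : nexp) : expr t -> expr (prune t).
Proof.
  unfold expr. induction t; simpl; auto.
  intros [[? ?] [? ?]]. destruct (IHt1 (conj H H1)), (IHt2 (conj H0 H2)).
  destruct (prune t1), (prune t2); simpl in *; tauto.
Qed.

Lemma nsum_expr (a b : nexp) : expr a -> expr b -> expr (nsum a b).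
Proof. unfold expr. destruct a, b; simpl; tauto. Qed.

Lemma fv_nsum (a b : nexp) v : In v (fvN (nsum a b)) -> In v (fvN a) \/ In v (fvN b).
Proof. destruct a, b; simpl; rewrite ?in_app_iff; tauto. Qed.

Lemma fv_prune (t : nexp) v : In v (fvN (prune t)) -> In v (fvN t).
Proof.
  induction t; simpl; auto. intro H. apply fv_nsum in H. rewrite in_app_iff. tauto.
Qed.

Lemma stdP_leaves {Xs} {P : pexp} {y} : stdP Xs P -> In y (leavesP P) -> In y Xs.
Proof.
  induction P as [[]|]; simpl; try tauto.
  - intros ? [->|[]]; auto.
  - rewrite in_app_iff. intros [? ?] [?|?]; auto.
Qed.

Lemma stdP_leaves_nonempty {Xs} {P : pexp} : stdP Xs P -> leavesP P <> [].
Proof.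
  induction P as [[]|]; simpl; try tauto; try discriminate.
  intros [Ha _] H. apply app_eq_nil in H. exact (IHP1 Ha (proj1 H)).
Qed.

Lemma stdP_fv {Xs} {P : pexp} {y} : stdP Xs P -> In y (fvP P) -> In y Xs.
Proof.
  induction P as [[]|]; simpl; try tauto.
  - intros ? [->|[]]; auto.
  - rewrite in_app_iff. intros [? ?] [?|?]; auto.
Qed.

Lemma stdP_incl {Xs Ys} {P : pexp} : stdP Xs P -> incl Xs Ys -> stdP Ys P.
Proof.
  induction P as [[]|]; simpl; try tauto.
  intros Hn HXY; exact (HXY _ Hn).
Qed.

Lemma stdP_lc {Xs} {P : pexp} k : stdP Xs P -> lcP k P.
Proof. induction P as [[]|]; simpl; tauto. Qed.

Lemma stdP_fsubst {Xs} {P : pexp} {s} : stdP Xs P -> (forall y, In y Xs -> s y = NFV y) ->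
  fsubstP s P = P.
Proof.
  induction P as [[]|]; simpl; try tauto.
  - intros. rewrite H0; auto.
  - intros [? ?] ?. rewrite IHP1, IHP2; auto.
Qed.

Lemma std_sum_summand_pre {Xs} {t : nexp} {a P} : std_sum Xs t -> summand t (NPre a P) ->
  stdP Xs P /\ NoDup (leavesP P).
Proof.
  induction t; simpl; intros H1 H2; try discriminate;
    try (injection H2; intros; subst); tauto.
Qed.

Lemma std_sum_summand_fv {Xs} {t : nexp} {v} : std_sum Xs t -> summand t (NFV v) -> ~ In v Xs.
Proof.
  induction t; simpl; intros H1 H2; try discriminate;
    try (injection H2; intros; subst); tauto.
Qed.

Lemma summand_probs {t s : nexp} : probsN t -> summand t s -> probsN s.
Proof. induction t; simpl; intros H1 H2; subst; simpl; tauto. Qed.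

Lemma summand_fv {t : nexp} {v} : summand t (NFV v) -> In v (fvN t).
Proof.
  induction t; simpl; rewrite ?in_app_iff; intros H; try discriminate;
    try (injection H; intros; subst); tauto.
Qed.

Lemma std_sum_fv {Xs} {t : nexp} {v} : std_sum Xs t -> In v (fvN t) ->
  In v Xs \/ summand t (NFV v).
Proof.
  induction t; simpl; try tauto.
  - intros ? [->|[]]; auto.
  - intros [? ?] ?. left. eapply stdP_fv; eauto.
  - rewrite in_app_iff. intros [Ha Hb] [H|H]; firstorder.
Qed.

Lemma stdRhs_transfer {Xs Ys} {t : nexp} : stdRhs Xs t -> incl Xs Ys ->
  (forall v, summand t (NFV v) -> ~ In v Ys) -> stdRhs Ys t.
Proof.
  intros [->|H] HXY Hv; [left; auto|right]. revert H Hv.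
  induction t; simpl; intros H Hv; try tauto.
  - apply Hv; auto.
  - destruct H; split; auto; eapply stdP_incl; eauto.
  - destruct H; split; [apply IHt1|apply IHt2]; auto.
Qed.

Definition subst1 (x : nat) (u : nexp) : nat -> nexp :=
  fun v => if Nat.eqb v x then u else NFV v.

Lemma subst1_eq x (u : nexp) : subst1 x u x = u.
Proof. unfold subst1. rewrite Nat.eqb_refl. reflexivity. Qed.

Lemma subst1_neq x (u : nexp) v : v <> x -> subst1 x u v = NFV v.
Proof. unfold subst1. intro H. destruct (Nat.eqb_spec v x); congruence. Qed.

Lemma subst1_lc x (u : nexp) : lcN 0 u -> lc_subst (subst1 x u).
Proof. intros H v. unfold subst1. destruct (Nat.eqb v x); simpl; auto. Qed.

Lemma subst1_probs x (u : nexp) : probsN u -> forall v, probsN (subst1 x u v).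
Proof. intros H v. unfold subst1. destruct (Nat.eqb v x); simpl; auto. Qed.

Lemma subst1_expr x (u t : nexp) : expr u -> expr t -> expr (fsubstN (subst1 x u) t).
Proof.
  intros [Hl Hp] [Htl Htp]. split.
  - exact (proj1 (lc_fsubst _ (subst1_lc x u Hl)) _ _ Htl).
  - exact (proj1 (probs_fsubst _ (subst1_probs x u Hp)) _ Htp).
Qed.

Lemma subst1_stdP {Xs} x u {P : pexp} : stdP Xs P -> ~ In x Xs ->
  fsubstP (subst1 x u) P = P.
Proof.
  intros HP Hx. eapply stdP_fsubst; [exact HP|]. intros y Hy. unfold subst1.
  destruct (Nat.eqb_spec y x); congruence.
Qed.

Lemma summand_subst1 {Xs x u} {t s : nexp} : std_sum Xs t -> ~ In x Xs ->
  summand (fsubstN (subst1 x u) t) s ->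
  (summand t s /\ s <> NFV x) \/ (summand t (NFV x) /\ summand u s).
Proof.
  induction t; simpl; try tauto.
  - unfold subst1. intros Hn Hx. destruct (Nat.eqb_spec n x) as [->|Hnx]; [tauto|].
    simpl. intros ->. left; split; auto. congruence.
  - intros [Hs Hn] Hx ->. left. rewrite (subst1_stdP x u Hs Hx). split; [auto|discriminate].
Qed.

Lemma std_sum_subst1 {Xs x} {u t : nexp} : std_sum Xs t -> std_sum Xs u -> ~ In x Xs ->
  std_sum Xs (fsubstN (subst1 x u) t).
Proof.
  induction t; simpl; try tauto.
  - unfold subst1. destruct (Nat.eqb_spec n x); simpl; auto.
  - intros [Hs Hn] ? Hx. rewrite (subst1_stdP x u Hs Hx). auto.
Qed.

Fixpoint norecN (t : nexp) : Prop :=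
  match t with
  | NRec _ => False
  | NPre _ P => norecP P
  | NSum a b => norecN a /\ norecN b
  | _ => True
  end
with norecP (P : pexp) : Prop :=
  match P with
  | PDirac E => norecN E
  | POplus _ P Q => norecP P /\ norecP Q
  end.

Lemma std_sum_norec {Xs} {t : nexp} : std_sum Xs t -> norecN t.
Proof.
  induction t; simpl; try tauto.
  intros [H _]. revert H. induction p as [[]|]; simpl; tauto.
Qed.

(* Restricted to [rec]-free terms, where congruence of [eqN] needs no fresh names. *)
Lemma fsubst_congr s s' :
  (forall (t : nexp), norecN t -> (forall v, In v (fvN t) -> eqN (s v) (s' v)) ->
     eqN (fsubstN s t) (fsubstN s' t)) /\
  (forall (P : pexp), norecP P -> (forall v, In v (fvP P) -> eqN (s v) (s' v)) ->
     eqP (fsubstP s P) (fsubstP s' P)).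
Proof.
  apply nexp_pexp_mind; simpl; intros; try tauto; try apply eqN_refl.
  - apply H0; auto.
  - apply eqN_pre; auto.
  - destruct H1. apply eqN_sum; auto with datatypes.
  - apply eqP_dirac; auto.
  - destruct H1. apply eqP_oplus; auto with datatypes.
Qed.

End Summands.

Section Entries.

Definition formals_of (b : list entry) : list nat := map (fun e => fst (fst e)) b.
Definition rhss_of (b : list entry) : list nexp := map (fun e => snd (fst e)) b.
Definition sols_of (b : list entry) : list nexp := map (fun e : entry => snd e) b.
Definition sol_of (b : list entry) : nat -> nexp := lookup (formals_of b) (sols_of b).

Lemma sol_of_cons Y S0 E b v :
  sol_of (((Y,S0),E)::b) v = if Nat.eqb v Y then E else sol_of b v.
Proof. reflexivity. Qed.

Lemma in_formals_of Y b : In Y (formals_of b) <-> exists S0 E, In ((Y,S0),E) b.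
Proof.
  unfold formals_of. rewrite in_map_iff. split.
  - intros [[[y s] e] [H1 H2]]. simpl in H1. subst. eauto.
  - intros [s [e H]]. exists ((Y,s),e); auto.
Qed.

Lemma formals_of_app b1 b2 : formals_of (b1 ++ b2) = formals_of b1 ++ formals_of b2.
Proof. apply map_app. Qed.

Lemma formals_of_incl (b1 b : list entry) : incl b1 b -> incl (formals_of b1) (formals_of b).
Proof.
  intros H v Hv. apply in_formals_of in Hv. destruct Hv as [s [e He]].
  apply in_formals_of; eauto.
Qed.

Lemma sol_of_notin b v : ~ In v (formals_of b) -> sol_of b v = NFV v.
Proof.
  induction b as [|[[y s] e] b IH]; intros H; [reflexivity|].
  rewrite sol_of_cons. simpl in H. destruct (Nat.eqb_spec v y); [subst; tauto|].
  apply IH; tauto.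
Qed.

Lemma entry_unique {b Y S1 E1 S2 E2} : NoDup (formals_of b) ->
  In ((Y,S1),E1) b -> In ((Y,S2),E2) b -> S1 = S2 /\ E1 = E2.
Proof.
  induction b as [|[[y s] e] b IH]; intros Hn H1 H2; [destruct H1|].
  inversion Hn as [|? ? Hy Hn']; subst.
  destruct H1 as [H1|H1], H2 as [H2|H2].
  - rewrite H1 in H2; injection H2; auto.
  - injection H1; intros; subst. exfalso. apply Hy, in_formals_of; eauto.
  - injection H2; intros; subst. exfalso. apply Hy, in_formals_of; eauto.
  - eauto.
Qed.

Lemma sol_of_in {b Y S0 E} : NoDup (formals_of b) -> In ((Y,S0),E) b -> sol_of b Y = E.
Proof.
  induction b as [|[[y s] e] b IH]; intros Hn H; [destruct H|].
  rewrite sol_of_cons. destruct (Nat.eqb_spec Y y) as [->|HY].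
  - exact (proj2 (entry_unique Hn (or_introl eq_refl) H)).
  - destruct H as [H|H]; [injection H; intros; congruence|]. simpl in Hn. inversion Hn; auto.
Qed.

Lemma sol_of_app_l b1 b2 v : In v (formals_of b1) -> sol_of (b1 ++ b2) v = sol_of b1 v.
Proof.
  induction b1 as [|[[y s] e] b1 IH]; intros H; [destruct H|].
  simpl app. rewrite !sol_of_cons. destruct (Nat.eqb_spec v y); auto.
  apply IH. simpl in H. destruct H; [congruence|auto].
Qed.

Lemma sol_of_app_r b1 b2 v : ~ In v (formals_of b1) -> sol_of (b1 ++ b2) v = sol_of b2 v.
Proof.
  induction b1 as [|[[y s] e] b1 IH]; intros H; [reflexivity|].
  simpl app. rewrite !sol_of_cons. simpl in H. destruct (Nat.eqb_spec v y); [subst; tauto|].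
  apply IH; tauto.
Qed.

Definition ug_step (A : nat -> Prop) (V : list nat) (S0 : nexp) : Prop :=
  (exists P, summand S0 (NPre Tau P) /\ forall y, In y (leavesP P) -> A y) \/
  (exists v, In v V /\ summand S0 (NFV v)).

Lemma ug_step_subst1 {A V x S1 S0 Xs} :
  ug_step A V (prune (fsubstN (subst1 x S1) S0)) -> std_sum Xs S0 -> ~ In x Xs ->
  ug_step A (x :: V) S0 /\ (ug_step A V S0 \/ (summand S0 (NFV x) /\ ug_step A V S1)).
Proof.
  intros [[P [HP HPl]]|[v [Hv HS]]] Hstd Hx;
    [rewrite summand_prune in HP; destruct (summand_subst1 Hstd Hx HP) as [[H1 _]|[H1 H2]]
    |rewrite summand_prune in HS; destruct (summand_subst1 Hstd Hx HS) as [[H1 _]|[H1 H2]]].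
  - split; left; [|left]; exists P; auto.
  - split; [right; exists x; simpl; auto|right; split; auto; left; exists P; auto].
  - split; [right; exists v; simpl; auto|left; right; exists v; auto].
  - split; [right; exists x; simpl; auto|right; split; auto; right; exists v; auto].
Qed.

Definition ug_closed (b : list entry) (A : nat -> Prop) (V : list nat) : Prop :=
  forall Y, A Y -> exists S0 E, In ((Y,S0),E) b /\ ug_step A V S0.

(* Combinatorial guardedness: no nonempty set of formals can loop silently forever. *)
Definition tau_founded (b : list entry) : Prop :=
  forall A, ug_closed b A [] -> forall Y, ~ A Y.

Definition tau_leaves_within (b : list entry) : Prop :=
  forall Y S0 E, In ((Y,S0),E) b -> forall P, summand S0 (NPre Tau P) ->
    forall y, In y (leavesP P) -> In y (formals_of b).

Lemma ug_step_mono (A A' : nat -> Prop) V V' S0 : (forall y, A y -> A' y) -> incl V V' ->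
  ug_step A V S0 -> ug_step A' V' S0.
Proof.
  intros HA HV [[P [H1 H2]]|[v [H1 H2]]]; [left; exists P|right; exists v]; auto.
Qed.

Lemma ug_step_restrict A V S0 Xs : ug_step A V S0 ->
  (forall P, summand S0 (NPre Tau P) -> forall y, In y (leavesP P) -> In y Xs) ->
  ug_step (fun y => A y /\ In y Xs) V S0.
Proof.
  intros [[P [H1 H2]]|H3] H; [left; exists P; split; eauto|right; auto].
Qed.

Lemma ug_step_nsum A V (S1 S2 : nexp) :
  ug_step A V (nsum S1 S2) -> ug_step A V S1 \/ ug_step A V S2.
Proof.
  unfold ug_step. setoid_rewrite summand_nsum. firstorder.
Qed.

Lemma ug_closed_head {X S0 E tl A V} : NoDup (formals_of (((X,S0),E)::tl)) ->
  ug_closed (((X,S0),E)::tl) A V -> A X -> ug_step A V S0.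
Proof.
  intros Hn HC HX. destruct (HC X HX) as [S1 [E1 [Hin HO]]].
  destruct (entry_unique Hn Hin (or_introl eq_refl)) as [-> _]. exact HO.
Qed.

Lemma ug_closed_restrict {b b1 A V} : ug_closed b A V -> incl b1 b ->
  NoDup (formals_of b) -> tau_leaves_within b1 ->
  ug_closed b1 (fun y => A y /\ In y (formals_of b1)) V.
Proof.
  intros HC Hi Hn HL Y [HY HY1].
  destruct (HC Y HY) as [S0 [E [HS HO]]].
  apply in_formals_of in HY1. destruct HY1 as [S1 [E1 HS1]].
  destruct (entry_unique Hn HS (Hi _ HS1)) as [-> ->].
  exists S1, E1; split; auto. apply ug_step_restrict; eauto.
Qed.

Lemma ug_closed_add {b A V X S0 E} : ug_closed b A V -> In ((X,S0),E) b -> ug_step A V S0 ->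
  ug_closed b (fun y => A y \/ y = X) V.
Proof.
  intros HC Hin HO Y [HY| ->].
  - destruct (HC Y HY) as [S1 [E1 [? ?]]]. exists S1, E1; split; auto.
    eapply ug_step_mono; [| |eauto]; [tauto|apply incl_refl].
  - exists S0, E; split; auto. eapply ug_step_mono; [| |eauto]; [tauto|apply incl_refl].
Qed.

Lemma tau_founded_app b1 b2 : tau_founded b1 -> tau_founded b2 ->
  tau_leaves_within b1 -> tau_leaves_within b2 -> NoDup (formals_of (b1 ++ b2)) ->
  tau_founded (b1 ++ b2).
Proof.
  intros K1 K2 L1 L2 Hn A HC Y HY.
  destruct (HC Y HY) as [S0 [E [Hin _]]]. apply in_app_or in Hin. destruct Hin as [Hin|Hin].
  - refine (K1 _ (ug_closed_restrict HC _ Hn L1) Y _); [apply incl_appl, incl_refl|].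
    split; auto. apply in_formals_of; eauto.
  - refine (K2 _ (ug_closed_restrict HC _ Hn L2) Y _); [apply incl_appr, incl_refl|].
    split; auto. apply in_formals_of; eauto.
Qed.

Lemma tau_founded_cons Y S0 E b : tau_founded b -> tau_leaves_within b ->
  NoDup (Y :: formals_of b) ->
  (forall P, summand S0 (NPre Tau P) ->
     leavesP P <> [] /\ forall y, In y (leavesP P) -> In y (formals_of b)) ->
  tau_founded (((Y,S0),E) :: b).
Proof.
  intros K Lb Hn HS A HC Z HZ.
  assert (HC1 : ug_closed b (fun y => A y /\ In y (formals_of b)) []).
  { apply (ug_closed_restrict HC); auto. intros e He; right; auto. }
  destruct (HC Z HZ) as [S1 [E1 [[Heq|Hin] HO]]].
  - injection Heq; intros; subst. destruct HO as [[P [HP HPl]]|[v [[] _]]].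
    destruct (HS P HP) as [Hne Hsub].
    destruct (leavesP P) as [|y l] eqn:Hl; [tauto|].
    apply (K _ HC1 y). split; [apply HPl|apply Hsub]; left; auto.
  - apply (K _ HC1 Z). split; auto. apply in_formals_of; eauto.
Qed.

Definition sys_of (b : list entry) : eqsys L := EqSys (formals_of b) (rhss_of b).

Lemma nth_entry (b : list entry) i : (i < length b)%nat ->
  In ((nth i (formals_of b) 0%nat, nth i (rhss_of b) NNil), nth i (sols_of b) NNil) b.
Proof.
  revert i. induction b as [|[[y s] e] b IH]; simpl; intros i Hi; [lia|].
  destruct i as [|i]; [left; reflexivity|right]. apply IH. lia.
Qed.

End Entries.

Lemma infinite_sum_ge_term (f : nat -> R) l :
  (forall j, 0 <= f j)%R -> infinite_sum f l -> forall i, (f i <= l)%R.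
Proof.
  intros Hf Hs i. apply Rle_trans with (sum_f_R0 f i); [|exact (sum_incr f i l Hs Hf)].
  destruct i; simpl; [lra|]. pose proof (cond_pos_sum f i Hf). lra.
Qed.

Section Guardedness.
Local Open Scope R_scope.

Lemma step_summand {Xs} {t : nexp} {a mu} : step t a mu -> std_sum Xs t ->
  exists P, summand t (NPre a P) /\ pmap P mu.
Proof.
  induction 1; simpl; intros Ht; [exists P; auto|tauto| |].
  - destruct (IHstep (proj1 Ht)) as [P [? ?]]; eauto.
  - destruct (IHstep (proj2 Ht)) as [P [? ?]]; eauto.
Qed.

Lemma pmap_nonneg {P : pexp} {mu} : pmap P mu -> probsP P -> forall F, 0 <= mu F.
Proof.
  induction 1 as [E mu HE H0|p P Q mu nu _ IHP _ IHQ]; simpl; intros HP F.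
  - destruct (classic (F = E)) as [->|Hn]; [rewrite HE|rewrite H0]; auto; lra.
  - destruct HP as [Hp [HPp HQp]].
    specialize (IHP HPp F). specialize (IHQ HQp F). nra.
Qed.

Lemma pmap_leaves_pos {Xs} {P : pexp} {mu} : pmap P mu -> probsP P -> stdP Xs P ->
  forall y, In y (leavesP P) -> 0 < mu (NFV y).
Proof.
  induction 1 as [E mu HE _|p P Q mu nu HmP IHP HmQ IHQ]; simpl; intros Hpr Hstd y Hy.
  - destruct E; simpl in *; try tauto. destruct Hy as [<-|[]]. rewrite HE; lra.
  - destruct Hpr as [Hp [HP HQ]], Hstd as [SP SQ].
    pose proof (pmap_nonneg HmP HP (NFV y)). pose proof (pmap_nonneg HmQ HQ (NFV y)).
    apply in_app_or in Hy. destruct Hy as [Hy|Hy].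
    + specialize (IHP HP SP y Hy). nra.
    + specialize (IHQ HQ SQ y Hy). nra.
Qed.

Lemma sys_trans_summand {sy : eqsys L} {x a nu} : sys_wf sy -> standard sy -> sys_trans sy x a nu ->
  exists i (P : pexp), (i < length (formals sy))%nat /\ nth i (formals sy) 0%nat = x /\
    summand (nth i (rhs sy) NNil) (NPre a P) /\
    (forall y, 0 <= nu y) /\ (forall y, In y (leavesP P) -> 0 < nu y).
Proof.
  intros [_ [Hlen [_ Hexpr]]] Hstd [i [Hi [Hx [_ [mu [Hstep Hmu]]]]]].
  assert (Hin : In (nth i (rhs sy) NNil) (rhs sy)) by (apply nth_In; lia).
  pose proof (stdRhs_std_sum (proj1 (Forall_forall _ _) Hstd _ Hin)) as Hsum.
  destruct (proj1 (Forall_forall _ _) Hexpr _ Hin) as [_ Hpr].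
  destruct (step_summand Hstep Hsum) as [P [HP Hpm]].
  assert (HPpr : probsP P) by exact (summand_probs Hpr HP).
  exists i, P; repeat split; auto.
  - intro y. change (nu y) with (@liftD L nu (NFV y)). rewrite <- Hmu.
    exact (pmap_nonneg Hpm HPpr _).
  - intros y Hy. change (nu y) with (@liftD L nu (NFV y)). rewrite <- Hmu.
    destruct (std_sum_summand_pre Hsum HP) as [HPstd _].
    exact (pmap_leaves_pos Hpm HPpr HPstd y Hy).
Qed.

Lemma ctrans_nonneg {sy : eqsys L} {a m n} : sys_wf sy -> standard sy -> ctrans sy a m n ->
  (forall y, 0 <= m y) /\ (forall y, 0 <= n y).
Proof.
  intros Hw Hs. induction 1 as [x nu Htr| |c1 c2 m1 n1 m2 n2 Hc1 Hc2 _ _ [Hm1 Hn1] _ [Hm2 Hn2]].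
  - split; [intro y; unfold diracN; destruct (Nat.eqb y x); lra|].
    destruct (sys_trans_summand Hw Hs Htr) as [i [P [_ [_ [_ [Hnu _]]]]]]. exact Hnu.
  - unfold zeroD; split; intros; lra.
  - split; intro y.
    + specialize (Hm1 y); specialize (Hm2 y); nra.
    + specialize (Hn1 y); specialize (Hn2 y); nra.
Qed.

Definition tau_into (sy : eqsys L) (A : nat -> Prop) (Y : nat) : Prop :=
  exists i (P : pexp), (i < length (formals sy))%nat /\ nth i (formals sy) 0%nat = Y /\
    summand (nth i (rhs sy) NNil) (NPre Tau P) /\ forall y, In y (leavesP P) -> A y.

Lemma tau_into_mono {sy : eqsys L} {A B : nat -> Prop} {Y} : (forall y, A y -> B y) ->
  tau_into sy A Y -> tau_into sy B Y.
Proof. intros HAB [i [P [? [? [? HP]]]]]. exists i, P; repeat split; auto. Qed.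

Lemma ctrans_tau_support {sy : eqsys L} {m n} : sys_wf sy -> standard sy -> ctrans sy Tau m n ->
  forall Y, 0 < m Y -> tau_into sy (fun y => 0 < n y) Y.
Proof.
  intros Hw Hs. induction 1 as [x nu Htr| |c1 c2 m1 n1 m2 n2 Hc1 Hc2 _ Hmn1 IH1 Hmn2 IH2];
    intros Y HY.
  - unfold diracN in HY. destruct (Nat.eqb_spec Y x) as [HYx|]; [subst Y|lra].
    destruct (sys_trans_summand Hw Hs Htr) as [i [P [? [? [? [_ Hpos]]]]]].
    exists i, P; auto.
  - unfold zeroD in HY; lra.
  - destruct (ctrans_nonneg Hw Hs Hmn1) as [Hm1 Hn1].
    destruct (ctrans_nonneg Hw Hs Hmn2) as [Hm2 Hn2].
    pose proof (Hm1 Y). pose proof (Hm2 Y).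
    destruct (Rlt_dec 0 (c1 * m1 Y)) as [Hc|Hc].
    + apply (tau_into_mono (A := fun y => 0 < n1 y)); [|apply IH1; nra].
      intros y Hy. pose proof (Hn2 y). assert (0 < c1) by nra. nra.
    + apply (tau_into_mono (A := fun y => 0 < n2 y)); [|apply IH2; nra].
      intros y Hy. pose proof (Hn1 y). assert (0 < c2) by nra. nra.
Qed.

Section Derivation.
Variables (sy : eqsys L) (mto mx : nat -> Defs.dist) (nu : Defs.dist).
Hypothesis Hnonneg : forall i x, 0 <= mto i x /\ 0 <= mx i x.
Hypothesis Hsteps : forall i, ctrans sy Tau (mto i) (fun x => mto (S i) x + mx (S i) x).
Hypothesis Hlimit : forall x, infinite_sum (fun i => mx i x) (nu x).

Lemma derivation_positive i y : 0 < mto i y + mx i y -> 0 < mto i y \/ 0 < nu y.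
Proof.
  intro Hy. destruct (Rlt_dec 0 (mto i y)) as [|Hmto]; [left; auto|right].
  pose proof (infinite_sum_ge_term _ _ (fun j => proj2 (Hnonneg j y)) (Hlimit y) i).
  pose proof (Hnonneg i y). lra.
Qed.

Lemma derivation_tau_into : sys_wf sy -> standard sy ->
  forall i Y, 0 < mto i Y -> tau_into sy (fun y => (exists j, 0 < mto j y) \/ 0 < nu y) Y.
Proof.
  intros Hw Hs i Y HY. refine (tau_into_mono _ (ctrans_tau_support Hw Hs (Hsteps i) Y HY)).
  intros y Hy. destruct (derivation_positive (S i) y Hy); eauto.
Qed.

End Derivation.

Lemma tau_loop_closed {sy : eqsys L} {x} : sys_wf sy -> standard sy ->
  weak_tr sy Tau (diracN x) (diracN x) ->
  exists A : nat -> Prop, A x /\ forall Y, A Y -> tau_into sy A Y.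
Proof.
  intros Hw Hs [m1 [m2 [[mto1 [mx1 [Hn1 [Hc1 [H01 Hl1]]]]]
    [Hm [mto3 [mx3 [Hn3 [Hc3 [H03 Hl3]]]]]]]]].
  set (A := fun Y => (exists i, 0 < mto1 i Y) \/ 0 < m1 Y \/ (exists i, 0 < mto3 i Y)).
  assert (Ax : A x).
  { assert (H := H01 x). unfold diracN in H. rewrite Nat.eqb_refl in H.
    destruct (derivation_positive mto1 mx1 _ Hn1 Hl1 0 x) as [|];
      [lra|left; eauto|right; left; auto]. }
  assert (Hend : forall y, (exists j, 0 < mto3 j y) \/ 0 < diracN x y -> A y).
  { intros y [Hy|Hy]; [right; right; auto|].
    unfold diracN in Hy. destruct (Nat.eqb_spec y x) as [Hyx|]; [subst y; auto|lra]. }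
  exists A; split; auto.
  intros Y [[i Hi]|[Hi|[i Hi]]].
  - refine (tau_into_mono _ (derivation_tau_into sy mto1 mx1 m1 Hn1 Hc1 Hl1 Hw Hs i Y Hi)).
    intros y [Hy|Hy]; [left|right; left]; auto.
  - refine (tau_into_mono _ (ctrans_tau_support Hw Hs Hm Y Hi)).
    intros y Hy. rewrite H03 in Hy. apply Hend.
    destruct (derivation_positive mto3 mx3 _ Hn3 Hl3 0 y Hy); eauto.
  - exact (tau_into_mono Hend
      (derivation_tau_into sy mto3 mx3 (diracN x) Hn3 Hc3 Hl3 Hw Hs i Y Hi)).
Qed.

Lemma sys_guarded_of_tau_founded b : sys_wf (sys_of b) -> standard (sys_of b) ->
  tau_founded b -> sys_guarded (sys_of b).
Proof.
  intros Hw Hs Hb x _ Hloop. destruct (tau_loop_closed Hw Hs Hloop) as [A [HA HAc]].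
  apply (Hb A) with x; auto. intros Y HY.
  destruct (HAc Y HY) as [i [P [Hi [HiY [HP HPl]]]]]. cbn [formals rhs sys_of] in Hi, HiY, HP.
  exists (nth i (rhss_of b) NNil), (nth i (sols_of b) NNil). split.
  - rewrite <- HiY. apply nth_entry. unfold formals_of in Hi. rewrite length_map in Hi. exact Hi.
  - left. exists P; auto.
Qed.

End Guardedness.

Section Blocks.

Definition entry_ok (b : list entry) (FV : list nat) (S0 E : nexp) : Prop :=
  stdRhs (formals_of b) S0 /\ expr S0 /\ expr E /\
  (forall v, In v (fvN S0) -> In v (formals_of b) \/ In v FV).

(* Provable equality is not known to be closed under substitution, so the
   equations are required to hold under every closing substitution [t]; the case
   of [rec] instantiates [t] with the unfolding of the recursion. *)
Definition solved_in (b1 b : list entry) : Prop :=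
  forall t, lc_subst t -> forall Y S0 E, In ((Y,S0),E) b1 ->
    eqN (fsubstN t E) (fsubstN t (fsubstN (sol_of b) S0)).

Definition names_in (b : list entry) (n0 n1 : nat) : Prop :=
  forall Y, In Y (formals_of b) -> n0 <= Y < n1.

Lemma names_in_fresh {b n0 n1} {FV : list nat} : names_in b n0 n1 ->
  (forall v, In v FV -> v < n0) -> forall v, In v FV -> ~ In v (formals_of b).
Proof. intros Hr Hfv v Hv H. apply Hr in H. apply Hfv in Hv. lia. Qed.

Record block (b : list entry) (n0 n1 : nat) (FV : list nat) : Prop := {
  block_le : n0 <= n1;
  block_nodup : NoDup (formals_of b);
  block_range : names_in b n0 n1;
  block_ok : forall Y S0 E, In ((Y,S0),E) b -> entry_ok b FV S0 E;
  block_solved : solved_in b b;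
  block_founded : tau_founded b }.

#[global] Arguments block_le {b n0 n1 FV} _.
#[global] Arguments block_nodup {b n0 n1 FV} _.
#[global] Arguments block_range {b n0 n1 FV} _.
#[global] Arguments block_ok {b n0 n1 FV} _ {Y S0 E} _.
#[global] Arguments block_solved {b n0 n1 FV} _.
#[global] Arguments block_founded {b n0 n1 FV} _.

Lemma block_leaves_within {b n0 n1 FV} : block b n0 n1 FV -> tau_leaves_within b.
Proof.
  intros Hb Y S0 E Hin P HP y Hy.
  destruct (block_ok Hb Hin) as [Hs _].
  destruct (std_sum_summand_pre (stdRhs_std_sum Hs) HP) as [HPs _].
  exact (stdP_leaves HPs Hy).
Qed.

Lemma entry_ok_weaken {b1 b FV1 FV S0 E} : entry_ok b1 FV1 S0 E ->
  incl (formals_of b1) (formals_of b) -> (forall v, In v FV1 -> ~ In v (formals_of b)) ->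
  incl FV1 FV -> entry_ok b FV S0 E.
Proof.
  intros [Hs [He1 [He2 Hf]]] Hi Hn Hi2. split; [|split; [exact He1|split; [exact He2|]]].
  - apply (stdRhs_transfer Hs Hi). intros v Hv.
    destruct (Hf v (summand_fv Hv)) as [H|H]; auto.
    exfalso. exact (std_sum_summand_fv (stdRhs_std_sum Hs) Hv H).
  - intros v Hv. destruct (Hf v Hv); auto.
Qed.

Lemma block_ok_weaken {b1 b n0 n1 FV1 FV} : block b1 n0 n1 FV1 -> incl b1 b ->
  (forall v, In v FV1 -> ~ In v (formals_of b)) -> incl FV1 FV ->
  forall Y S0 E, In ((Y,S0),E) b1 -> entry_ok b FV S0 E.
Proof.
  intros Hb1 Hi Hfr HFV Y S0 E Hin.
  exact (entry_ok_weaken (block_ok Hb1 Hin) (formals_of_incl _ _ Hi) Hfr HFV).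
Qed.

Lemma block_solved_in {b1 b n0 n1 FV1} : block b1 n0 n1 FV1 -> incl b1 b ->
  NoDup (formals_of b) -> (forall v, In v FV1 -> ~ In v (formals_of b)) -> solved_in b1 b.
Proof.
  intros Hb1 Hi Hn Hfr t Ht Y S0 E Hin.
  rewrite ((proj1 fsubst_ext) S0 (sol_of b) (sol_of b1));
    [exact (block_solved Hb1 t Ht _ _ _ Hin)|].
  intros v Hv. destruct (proj2 (proj2 (proj2 (block_ok Hb1 Hin))) v Hv) as [H|H].
  - apply in_formals_of in H. destruct H as [s [e He]].
    rewrite (sol_of_in Hn (Hi _ He)), (sol_of_in (block_nodup Hb1) He). reflexivity.
  - rewrite !sol_of_notin; auto. intro H'. exact (Hfr v H (formals_of_incl _ _ Hi _ H')).
Qed.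

Lemma solved_in_app {b1 b2 b} : solved_in b1 b -> solved_in b2 b -> solved_in (b1 ++ b2) b.
Proof.
  intros H1 H2 t Ht Y S0 E Hin. apply in_app_or in Hin.
  destruct Hin; [apply H1 with Y|apply H2 with Y]; auto.
Qed.

Lemma block_nil n FV : block [] n n FV.
Proof.
  split.
  - lia.
  - constructor.
  - intros Y [].
  - intros Y S0 E [].
  - intros t _ Y S0 E [].
  - intros A HC Y HY. destruct (HC Y HY) as [S0 [E [[] _]]].
Qed.

Lemma block_app {b1 b2 n0 n1 n2 FV1 FV2 FV} :
  block b1 n0 n1 FV1 -> block b2 n1 n2 FV2 ->
  incl FV1 FV -> incl FV2 FV -> (forall v, In v FV -> v < n0) ->
  block (b1 ++ b2) n0 n2 FV.
Proof.
  intros Hb1 Hb2 Hi1 Hi2 Hfv.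
  assert (Hnd : NoDup (formals_of (b1 ++ b2))).
  { rewrite formals_of_app. apply NoDup_app; [exact (block_nodup Hb1)|
      exact (block_nodup Hb2)|].
    intros v H1 H2. apply (block_range Hb1) in H1.
    apply (block_range Hb2) in H2. lia. }
  assert (Hr : names_in (b1 ++ b2) n0 n2).
  { intros v Hv. rewrite formals_of_app, in_app_iff in Hv.
    pose proof (block_le Hb1). pose proof (block_le Hb2).
    destruct Hv as [Hv|Hv];
      [apply (block_range Hb1) in Hv|apply (block_range Hb2) in Hv]; lia. }
  assert (Hfr : forall FV', incl FV' FV -> forall v, In v FV' -> ~ In v (formals_of (b1 ++ b2))).
  { intros FV' HFV' v Hv. exact (names_in_fresh Hr Hfv v (HFV' v Hv)). }
  assert (Hin1 : incl b1 (b1 ++ b2)) by (apply incl_appl, incl_refl).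
  assert (Hin2 : incl b2 (b1 ++ b2)) by (apply incl_appr, incl_refl).
  split; auto.
  - pose proof (block_le Hb1). pose proof (block_le Hb2). lia.
  - intros Y S0 E Hin. apply in_app_or in Hin. destruct Hin as [Hin|Hin].
    + exact (block_ok_weaken Hb1 Hin1 (Hfr _ Hi1) Hi1 _ _ _ Hin).
    + exact (block_ok_weaken Hb2 Hin2 (Hfr _ Hi2) Hi2 _ _ _ Hin).
  - apply solved_in_app;
      [exact (block_solved_in Hb1 Hin1 Hnd (Hfr _ Hi1))
      |exact (block_solved_in Hb2 Hin2 Hnd (Hfr _ Hi2))].
  - apply tau_founded_app; auto;
      [exact (block_founded Hb1)|exact (block_founded Hb2)
      |exact (block_leaves_within Hb1)|exact (block_leaves_within Hb2)].
Qed.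

Lemma block_cons {b n0 n1 FV S0 E} :
  block b (S n0) n1 FV -> (forall v, In v FV -> v < n0) -> entry_ok b FV S0 E ->
  (forall t, lc_subst t -> eqN (fsubstN t E) (fsubstN t (fsubstN (sol_of b) S0))) ->
  block (((n0,S0),E)::b) n0 n1 FV.
Proof.
  intros Hb Hfv Hok HE.
  assert (Hn0 : ~ In n0 (formals_of b)).
  { intro H. apply (block_range Hb) in H. lia. }
  assert (Hnd : NoDup (formals_of (((n0,S0),E)::b)))
    by (constructor; [exact Hn0|exact (block_nodup Hb)]).
  assert (Hr : names_in (((n0,S0),E)::b) n0 n1).
  { pose proof (block_le Hb).
    intros Y [HY|HY]; [simpl in HY; lia|apply (block_range Hb) in HY; lia]. }
  assert (Hfr := names_in_fresh Hr Hfv).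
  assert (Hincl : incl b (((n0,S0),E)::b)) by (intros e He; right; exact He).
  destruct Hok as [Hstd [HS0 [HE0 Hfv0]]].
  split; auto.
  - pose proof (block_le Hb). lia.
  - intros Y S1 E1 [Heq|Hin].
    + injection Heq as <- <- <-. apply (entry_ok_weaken (b1 := b) (FV1 := FV));
        [split; [|split; [|split]]; auto|intros v Hv; right; exact Hv|exact Hfr|apply incl_refl].
    + exact (block_ok_weaken Hb Hincl Hfr (incl_refl _) _ _ _ Hin).
  - intros t Ht Y S1 E1 [Heq|Hin].
    + injection Heq as <- <- <-.
      rewrite ((proj1 fsubst_ext) S0 _ (sol_of b)); [exact (HE t Ht)|].
      intros v Hv. rewrite sol_of_cons. destruct (Nat.eqb_spec v n0) as [->|]; [|reflexivity].
      exfalso. destruct (Hfv0 n0 Hv) as [H|H]; [exact (Hn0 H)|specialize (Hfv n0 H); lia].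
    + exact (block_solved_in Hb Hincl Hnd Hfr t Ht _ _ _ Hin).
  - apply tau_founded_cons; auto;
      [exact (block_founded Hb)|exact (block_leaves_within Hb)|].
    intros P HP. destruct (std_sum_summand_pre (stdRhs_std_sum Hstd) HP) as [HPs _].
    split; [exact (stdP_leaves_nonempty HPs)|intros y Hy; exact (stdP_leaves HPs Hy)].
Qed.

Lemma block_sys_wf {b : list entry} {n0 n1 FV} : block b n0 n1 FV -> b <> [] ->
  sys_wf (sys_of b).
Proof.
  intros Hb Hne. split; [exact (block_nodup Hb)|split; [|split]]; cbn [formals rhs sys_of].
  - unfold formals_of, rhss_of. rewrite !length_map. reflexivity.
  - destruct b; [congruence|discriminate].
  - apply Forall_forall. intros S0 HS. unfold rhss_of in HS.
    apply in_map_iff in HS. destruct HS as [[[Y S1] E] [<- Hin]].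
    exact (proj1 (proj2 (block_ok Hb Hin))).
Qed.

Lemma block_standard {b : list entry} {n0 n1 FV} : block b n0 n1 FV -> standard (sys_of b).
Proof.
  intro Hb. apply Forall_forall. intros S0 HS. unfold rhss_of in HS.
  apply in_map_iff in HS. destruct HS as [[[Y S1] E] [<- Hin]].
  exact (proj1 (block_ok Hb Hin)).
Qed.

Lemma block_sysVar {b : list entry} {n0 n1 FV v} : block b n0 n1 FV ->
  sysVar (sys_of b) v -> In v FV.
Proof.
  intros Hb [Hv Hnf]. cbn [formals rhs sys_of] in Hv, Hnf.
  apply in_flat_map in Hv. destruct Hv as [S0 [HS Hv]].
  unfold rhss_of in HS. apply in_map_iff in HS. destruct HS as [[[Y S1] E] [<- Hin]].
  destruct (proj2 (proj2 (proj2 (block_ok Hb Hin))) v Hv); tauto.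
Qed.

Lemma block_satisfies {X} {S0 E : nexp} {tl n0 n1 FV} : block (((X,S0),E)::tl) n0 n1 FV ->
  satisfies E (sys_of (((X,S0),E)::tl)).
Proof.
  set (b := ((X,S0),E)::tl). intro Hb.
  assert (Hlen : length (sols_of b) = length (formals_of b))
    by (unfold sols_of, formals_of; rewrite !length_map; reflexivity).
  exists (sols_of b). cbn [formals rhs sys_of]. split; [exact Hlen|split; [|split; [reflexivity|]]].
  - apply Forall_forall. intros E' HE'. unfold sols_of in HE'.
    apply in_map_iff in HE'. destruct HE' as [[[Y S1] E1] [<- Hin]].
    exact (proj1 (proj2 (proj2 (block_ok Hb Hin)))).
  - intros i Hi. unfold formals_of in Hi. rewrite length_map in Hi.
    pose proof (block_solved Hb NFV (fun v => I) _ _ _ (nth_entry b i Hi)) as H.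
    rewrite !(proj1 fsubst_id) in H. exact H.
Qed.

End Blocks.

Section Representation.

(* [rep_unguarded] carries guardedness of [E] over to the system: a way for [X] to
   reach the variables [V] silently yields [E |> W] with [W] among [V]. *)
Record represents (X : nat) (S0 : nexp) (tl : list entry) (n0 n1 : nat) (E : nexp) :
  Prop := {
  rep_block : block (((X,S0),E)::tl) n0 n1 (fvN E);
  rep_unguarded : forall A V, A X -> ug_closed (((X,S0),E)::tl) A V ->
    exists W, UGN E W /\ incl W (map inr V) }.

#[global] Arguments rep_block {X S0 tl n0 n1 E} _.
#[global] Arguments rep_unguarded {X S0 tl n0 n1 E} _ _ _ _ _.

Record representsP (b : list entry) (n0 n1 : nat) (P Ph : pexp) : Prop := {
  repP_block : block b n0 n1 (fvP P);
  repP_std : stdP (formals_of b) Ph;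
  repP_leaves : NoDup (leavesP Ph);
  repP_probs : probsP Ph;
  repP_sol : fsubstP (sol_of b) Ph = P;
  repP_unguarded : forall A V, (forall y, In y (leavesP Ph) -> A y) -> ug_closed b A V ->
    exists W, UGP P W /\ incl W (map inr V) }.

#[global] Arguments repP_block {b n0 n1 P Ph} _.

Lemma represents_nil n0 : represents n0 NNil [] n0 (S n0) NNil.
Proof.
  assert (Hb : block [((n0,NNil),NNil) : entry] n0 (S n0) []).
  { apply (block_cons (block_nil _ _)); [intros v []| |intros; apply eqN_refl].
    split; [left; reflexivity|split; [split; exact I|split; [split; exact I|intros v []]]]. }
  split; [exact Hb|]. intros A V HA HC.
  destruct (ug_closed_head (block_nodup Hb) HC HA) as [[P [[] _]]|[v [_ []]]].
Qed.

Lemma represents_fv y n0 : y < n0 -> represents n0 (NFV y) [] n0 (S n0) (NFV y).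
Proof.
  intro Hy.
  assert (Hb : block [((n0,NFV y),NFV y) : entry] n0 (S n0) [y]).
  { apply (block_cons (block_nil _ _)); [intros v [<-|[]]; exact Hy| |intros; apply eqN_refl].
    split; [right; simpl; tauto|split; [split; exact I|split; [split; exact I|]]].
    intros v [<-|[]]. simpl; auto. }
  split; [exact Hb|]. intros A V HA HC.
  destruct (ug_closed_head (block_nodup Hb) HC HA) as [[P [HP _]]|[v [Hv HS]]];
    [discriminate|].
  simpl in HS. injection HS as ->. exists [inr y]; split; [constructor|].
  intros w [<-|[]]. apply in_map, Hv.
Qed.

Lemma representsP_dirac {X S0 tl n0 n1} {E : nexp} : represents X S0 tl n0 n1 E ->
  representsP (((X,S0),E)::tl) n0 n1 (PDirac E) (PDirac (NFV X)).
Proof.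
  intros [Hb HI]. split; simpl; auto.
  - repeat constructor. intros [].
  - rewrite sol_of_cons, Nat.eqb_refl. reflexivity.
  - intros A V HA HC. destruct (HI A V) as [W [HW HWV]]; auto.
    exists W; split; auto. constructor; auto.
Qed.

Lemma representsP_oplus {p} {P Q Ph Qh : pexp} {b1 b2 n0 n1 n2} :
  representsP b1 n0 n1 P Ph -> representsP b2 n1 n2 Q Qh ->
  (forall v, In v (fvP (POplus p P Q)) -> v < n0) -> (0 < p < 1)%R ->
  representsP (b1 ++ b2) n0 n2 (POplus p P Q) (POplus p Ph Qh).
Proof.
  intros [Hb1 Hs1 Hl1 Hp1 Hsub1 HI1] [Hb2 Hs2 Hl2 Hp2 Hsub2 HI2] Hfv Hp.
  assert (Hdis : forall v, In v (formals_of b1) -> ~ In v (formals_of b2)).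
  { intros v H1 H2. apply (block_range Hb1) in H1.
    apply (block_range Hb2) in H2. lia. }
  assert (HL1 := block_leaves_within Hb1). assert (HL2 := block_leaves_within Hb2).
  assert (Hb := block_app Hb1 Hb2 (incl_appl _ (incl_refl _)) (incl_appr _ (incl_refl _)) Hfv).
  assert (Hnd := block_nodup Hb).
  split; simpl; auto.
  - rewrite formals_of_app.
    split; (eapply stdP_incl; [eassumption|]); auto using incl_appl, incl_appr, incl_refl.
  - apply NoDup_app; auto. intros y Hy1 Hy2.
    exact (Hdis y (stdP_leaves Hs1 Hy1) (stdP_leaves Hs2 Hy2)).
  - f_equal.
    + rewrite <- Hsub1. apply (proj2 fsubst_ext). intros v Hv.
      apply sol_of_app_l. exact (stdP_fv Hs1 Hv).
    + rewrite <- Hsub2. apply (proj2 fsubst_ext). intros v Hv.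
      apply sol_of_app_r. intro H. exact (Hdis v H (stdP_fv Hs2 Hv)).
  - intros A V HA HC.
    destruct (HI1 (fun y => A y /\ In y (formals_of b1)) V) as [W1 [HW1 HV1]].
    { intros y Hy. split; [apply HA; apply in_or_app; auto|exact (stdP_leaves Hs1 Hy)]. }
    { eapply ug_closed_restrict; eauto. apply incl_appl, incl_refl. }
    destruct (HI2 (fun y => A y /\ In y (formals_of b2)) V) as [W2 [HW2 HV2]].
    { intros y Hy. split; [apply HA; apply in_or_app; auto|exact (stdP_leaves Hs2 Hy)]. }
    { eapply ug_closed_restrict; eauto. apply incl_appr, incl_refl. }
    exists (W1 ++ W2); split; [constructor; auto|apply incl_app; auto].
Qed.

Lemma represents_pre a (P Ph : pexp) b n0 n1 : representsP b (S n0) n1 P Ph ->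
  (forall v, In v (fvP P) -> v < n0) -> lcP 0 P -> probsP P ->
  represents n0 (NPre a Ph) b n0 n1 (NPre a P).
Proof.
  intros [Hb Hstd Hnl Hpr Hsub HI] Hfv HlcP HprP.
  assert (Hb' : block (((n0, NPre a Ph), NPre a P) :: b) n0 n1 (fvP P)).
  { apply (block_cons Hb Hfv).
    - split; [right; simpl; auto|split; [split; simpl; auto; exact (stdP_lc 0 Hstd)|]].
      split; [split; simpl; auto|]. intros v Hv. left. exact (stdP_fv Hstd Hv).
    - intros t Ht. simpl. rewrite Hsub. apply eqN_refl. }
  split; [exact Hb'|]. intros A V HA HC.
  destruct (ug_closed_head (block_nodup Hb') HC HA) as [[P' [HP' HPl]]|[v [_ Hv]]];
    [|discriminate].
  simpl in HP'. injection HP' as <- ->.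
  destruct (HI (fun y => A y /\ In y (formals_of b)) V) as [W [HW HWV]].
  - intros y Hy; split; [apply HPl; auto|exact (stdP_leaves Hstd Hy)].
  - apply (ug_closed_restrict HC (incl_tl _ (incl_refl _)) (block_nodup Hb')
      (block_leaves_within Hb)).
  - exists W; split; auto. constructor; auto.
Qed.

Lemma ug_closed_summand {X} {S0 E : nexp} {tl b : list entry} {A V n0 n1 FV} :
  let b1 := ((X,S0),E)::tl in
  block b1 n0 n1 FV -> incl b1 b -> NoDup (formals_of b) ->
  ug_closed b A V -> ug_step A V S0 ->
  ug_closed b1 (fun y => (A y /\ In y (formals_of b1)) \/ y = X) V.
Proof.
  intros b1 Hb1 Hi Hn HC HO.
  apply (ug_closed_add (ug_closed_restrict HC Hi Hn (block_leaves_within Hb1)) (or_introl eq_refl)).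
  apply (ug_step_restrict _ _ _ _ HO). intros P HP y Hy.
  exact (block_leaves_within Hb1 _ _ _ (or_introl eq_refl) P HP y Hy).
Qed.

Lemma represents_sum X1 S1 t1 X2 S2 t2 n0 n1 n2 (E F : nexp) :
  represents X1 S1 t1 (S n0) n1 E -> represents X2 S2 t2 n1 n2 F ->
  (forall v, In v (fvN (NSum E F)) -> v < n0) -> expr (NSum E F) ->
  represents n0 (nsum S1 S2) ((((X1,S1),E)::t1) ++ (((X2,S2),F)::t2)) n0 n2 (NSum E F).
Proof.
  set (b1 := ((X1,S1),E)::t1). set (b2 := ((X2,S2),F)::t2).
  intros [Hb1 HI1] [Hb2 HI2] Hfv [[HlE HlF] [HpE HpF]].
  assert (Hb12 : block (b1 ++ b2) (S n0) n2 (fvN (NSum E F))).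
  { apply (block_app Hb1 Hb2); [apply incl_appl, incl_refl|apply incl_appr, incl_refl|].
    intros v Hv. specialize (Hfv v Hv). lia. }
  assert (Hin1 : In ((X1,S1),E) (b1 ++ b2)) by (apply in_or_app; left; left; reflexivity).
  assert (Hin2 : In ((X2,S2),F) (b1 ++ b2)) by (apply in_or_app; right; left; reflexivity).
  destruct (block_ok Hb12 Hin1) as [Hs1 [He1 [_ Hf1]]].
  destruct (block_ok Hb12 Hin2) as [Hs2 [He2 [_ Hf2]]].
  assert (Hb : block (((n0, nsum S1 S2), NSum E F) :: b1 ++ b2) n0 n2 (fvN (NSum E F))).
  { apply (block_cons Hb12 Hfv).
    - split; [exact (nsum_std Hs1 Hs2)|split; [exact (nsum_expr _ _ He1 He2)|]].
      split; [split; split; auto|]. intros v Hv. destruct (fv_nsum _ _ _ Hv); auto.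
    - intros t Ht. simpl fsubstN at 1. eapply eqN_trans.
      + apply eqN_sum; [exact (block_solved Hb12 t Ht _ _ _ Hin1)
                       |exact (block_solved Hb12 t Ht _ _ _ Hin2)].
      + rewrite !(proj1 fsubst_comp). apply eqN_nsum. }
  split; [exact Hb|]. intros A V HA HC.
  assert (Hnd := block_nodup Hb).
  destruct (ug_step_nsum _ _ _ _ (ug_closed_head Hnd HC HA)) as [HO|HO].
  - destruct (HI1 _ V (or_intror eq_refl)
      (ug_closed_summand Hb1 (incl_tl _ (incl_appl _ (incl_refl _))) Hnd HC HO))
      as [W [HW HWV]].
    exists W; split; auto. constructor; auto.
  - destruct (HI2 _ V (or_intror eq_refl)
      (ug_closed_summand Hb2 (incl_tl _ (incl_appr _ (incl_refl _))) Hnd HC HO))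
      as [W [HW HWV]].
    exists W; split; auto. apply ug_sumr; auto.
Qed.

End Representation.

Section RecCase.

Definition rec_entry (x : nat) (S1 R : nexp) (e : entry) : entry :=
  ((fst (fst e), prune (fsubstN (subst1 x S1) (snd (fst e)))), fsubstN (subst1 x R) (snd e)).

Variables (X1 : nat) (S1 : nexp) (tl : list entry) (x n1 : nat) (B : nexp).
Hypothesis Hrep : represents X1 S1 tl (S x) n1 (open B (NFV x)).
Hypothesis HlcB : lcN 1 B.
Hypothesis HprB : probsN B.
Hypothesis Hguard : ~ unguarded_in B (inl 0).
Hypothesis HfvB : forall v, In v (fvN B) -> v < x.

Local Notation F := (open B (NFV x)).
Local Notation R := (NRec B).
Local Notation b := (((X1,S1),F)::tl).
Local Notation b' := (((X1, prune (fsubstN (subst1 x S1) S1)), R) :: map (rec_entry x S1 R) tl).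
Local Notation rho t := (fun v => fsubstN t (subst1 x R v)).

Let Hb := rep_block Hrep.

Lemma rec_formals : formals_of b' = formals_of b.
Proof.
  simpl. f_equal. unfold formals_of. rewrite map_map. apply map_ext.
  intros [[? ?] ?]; reflexivity.
Qed.

Lemma rec_x_fresh : ~ In x (formals_of b).
Proof. intro H. apply (block_range Hb) in H. lia. Qed.

Lemma rec_x_notin_B : ~ In x (fvN B).
Proof. intro H. specialize (HfvB x H). lia. Qed.

Lemma rec_fv_F v : In v (fvN F) -> v <> x -> In v (fvN B).
Proof.
  intros Hv Hvx. destruct (proj1 (fv_open _) _ _ _ Hv) as [H|[H|[]]]; [exact H|congruence].
Qed.

Lemma rec_head_ok : entry_ok b (fvN F) S1 F.
Proof. exact (block_ok Hb (or_introl eq_refl)). Qed.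

Lemma rec_head_std : std_sum (formals_of b) S1.
Proof. exact (stdRhs_std_sum (proj1 rec_head_ok)). Qed.

(* Guardedness of [rec X.B] forbids [X] as an unguarded summand of its equation. *)
Lemma rec_head_no_var : ~ summand S1 (NFV x).
Proof.
  intro Hs.
  destruct (rep_unguarded Hrep (fun y => y = X1) [x] eq_refl) as [W [HW HWV]].
  - intros Y ->. exists S1, F; split; [left; reflexivity|]. right. exists x; simpl; auto.
  - exact (rec_not_unguarded_in_fresh B x W Hguard rec_x_notin_B HW HWV).
Qed.

Lemma rec_x_notin_S1 : ~ In x (fvN S1).
Proof.
  intro H. destruct (std_sum_fv rec_head_std H) as [H'|H'];
    [exact (rec_x_fresh H')|exact (rec_head_no_var H')].
Qed.

Lemma rec_unfold t : lc_subst t -> eqN (fsubstN t R) (fsubstN (rho t) F).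
Proof.
  intro Ht.
  assert (Hrho : lc_subst (rho t)).
  { intro v. apply (proj1 (lc_fsubst _ Ht)). exact (subst1_lc x R HlcB v). }
  unfold open. rewrite (proj1 (fsubst_open _ Hrho)).
  rewrite ((proj1 fsubst_ext) B (rho t) t).
  - cbn [fsubstN]. rewrite subst1_eq. apply ax_R1. exact (proj1 (lc_fsubst _ Ht) B 1 HlcB).
  - intros v Hv. rewrite subst1_neq; [reflexivity|]. intros ->. exact (rec_x_notin_B Hv).
Qed.

Lemma rec_entry_origin Y S' E' : In ((Y,S'),E') b' ->
  exists S0 E, In ((Y,S0),E) b /\ S' = prune (fsubstN (subst1 x S1) S0) /\
    forall t, lc_subst t -> eqN (fsubstN t E') (fsubstN (rho t) E).
Proof.
  intros [Heq|Hin].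
  - injection Heq as <- <- <-. exists S1, F. split; [left; reflexivity|split; auto].
    exact rec_unfold.
  - apply in_map_iff in Hin. destruct Hin as [[[Y0 S0] E0] [Heq Hin]].
    injection Heq as <- <- <-. exists S0, E0. split; [right; exact Hin|split; auto].
    intros t _. rewrite (proj1 fsubst_comp). apply eqN_refl.
Qed.

Lemma rec_block_ok Y S' E' : In ((Y,S'),E') b' -> entry_ok b' (fvN R) S' E'.
Proof.
  intros Hin. destruct (rec_entry_origin _ _ _ Hin) as [S0 [E [Hin0 [-> _]]]].
  destruct (block_ok Hb Hin0) as [Hs [He [_ Hf]]].
  destruct rec_head_ok as [_ [He1 [_ Hf1]]].
  assert (HeR : expr R) by (split; assumption).
  unfold entry_ok. rewrite rec_formals. split; [|split; [|split]].
  - apply prune_std, std_sum_subst1; [exact (stdRhs_std_sum Hs)|exact rec_head_std|].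
    exact rec_x_fresh.
  - exact (prune_expr _ (subst1_expr x S1 S0 He1 He)).
  - destruct Hin as [Heq|Hin].
    + injection Heq as _ _ <-. exact HeR.
    + apply in_map_iff in Hin. destruct Hin as [[[Y0 S2] E2] [Heq Hin]].
      injection Heq as _ _ <-.
      exact (subst1_expr x R E2 HeR (proj1 (proj2 (proj2 (block_ok Hb (or_intror Hin)))))).
  - intros v Hv. apply fv_prune, (proj1 (fv_fsubst _)) in Hv. destruct Hv as [u [Hu Hv]].
    unfold subst1 in Hv. destruct (Nat.eqb_spec u x) as [->|Hux].
    + destruct (Hf1 v Hv) as [H|H]; [left; exact H|right].
      apply rec_fv_F; auto. intros ->. exact (rec_x_notin_S1 Hv).
    + destruct Hv as [<-|[]]. destruct (Hf u Hu) as [H|H]; [left; exact H|right].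
      exact (rec_fv_F u H Hux).
Qed.

Lemma rec_nodup : NoDup (formals_of b').
Proof. rewrite rec_formals. exact (block_nodup Hb). Qed.

Lemma rec_rho_lc t : lc_subst t -> lc_subst (rho t).
Proof. intros Ht v. apply (proj1 (lc_fsubst _ Ht)). exact (subst1_lc x R HlcB v). Qed.

Lemma rec_sol_agree t : lc_subst t -> forall v, v <> x ->
  eqN (fsubstN (rho t) (sol_of b v)) (fsubstN t (sol_of b' v)).
Proof.
  intros Ht v Hvx. destruct (in_dec Nat.eq_dec v (formals_of b)) as [Hv|Hv].
  - rewrite <- rec_formals in Hv. apply in_formals_of in Hv. destruct Hv as [S2 [E2 HE2]].
    destruct (rec_entry_origin _ _ _ HE2) as [S3 [E3 [HE3 [_ Hrel]]]].
    rewrite (sol_of_in rec_nodup HE2), (sol_of_in (block_nodup Hb) HE3).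
    apply eqN_sym, Hrel, Ht.
  - rewrite !sol_of_notin; [|rewrite rec_formals; exact Hv|exact Hv].
    cbn [fsubstN]. rewrite (subst1_neq x R v Hvx). apply eqN_refl.
Qed.

Lemma rec_sol_x t : lc_subst t ->
  eqN (fsubstN t R) (fsubstN (fun v => fsubstN t (sol_of b' v)) S1).
Proof.
  intro Ht. eapply eqN_trans; [exact (rec_unfold t Ht)|]. eapply eqN_trans.
  - pose proof (block_solved Hb (rho t) (rec_rho_lc t Ht) _ _ _ (or_introl eq_refl))
      as H.
    rewrite (proj1 fsubst_comp) in H. exact H.
  - apply (proj1 (fsubst_congr _ _)); [exact (std_sum_norec rec_head_std)|].
    intros v Hv. apply rec_sol_agree; auto. intros ->. exact (rec_x_notin_S1 Hv).
Qed.

Lemma rec_solved : solved_in b' b'.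
Proof.
  intros t Ht Y S' E' Hin.
  destruct (rec_entry_origin _ _ _ Hin) as [S0 [E [Hin0 [-> HE]]]].
  destruct (block_ok Hb Hin0) as [Hs _].
  eapply eqN_trans; [exact (HE t Ht)|]. eapply eqN_trans.
  { pose proof (block_solved Hb (rho t) (rec_rho_lc t Ht) _ _ _ Hin0) as H.
    rewrite (proj1 fsubst_comp) in H. exact H. }
  rewrite (proj1 fsubst_comp). eapply eqN_trans; [|apply eqN_prune].
  rewrite (proj1 fsubst_comp).
  apply (proj1 (fsubst_congr _ _)); [exact (std_sum_norec (stdRhs_std_sum Hs))|].
  intros v _. destruct (Nat.eq_dec v x) as [->|Hvx].
  - rewrite (sol_of_notin _ _ rec_x_fresh), subst1_eq. cbn [fsubstN]. rewrite subst1_eq.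
    exact (rec_sol_x t Ht).
  - rewrite (subst1_neq x S1 v Hvx). exact (rec_sol_agree t Ht v Hvx).
Qed.

Lemma rec_ug_closed_back A V : ug_closed b' A V -> forall y, A y ->
  exists S0 E, In ((y,S0),E) b /\ ug_step A (x :: V) S0 /\
    (ug_step A V S0 \/ (summand S0 (NFV x) /\ ug_step A V S1)).
Proof.
  intros HC y Hy. destruct (HC y Hy) as [S' [E' [Hin HO]]].
  destruct (rec_entry_origin _ _ _ Hin) as [S0 [E [Hin0 [-> _]]]].
  exists S0, E; split; auto.
  exact (ug_step_subst1 HO (stdRhs_std_sum (proj1 (block_ok Hb Hin0))) rec_x_fresh).
Qed.

(* A silent loop of the closed system either persists in [b], or it passes through
   [x] and then [X1] reaches [x] silently, contradicting guardedness of [rec X.B]. *)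
Lemma rec_founded : tau_founded b'.
Proof.
  intros A HC Y HY. pose proof (rec_ug_closed_back A [] HC) as Hback.
  destruct (classic (ug_step A [] S1)) as [H1|H1].
  - destruct (rep_unguarded Hrep (fun y => A y \/ y = X1) [x] (or_intror eq_refl))
      as [W [HW HWV]].
    + apply (ug_closed_add (X := X1) (S0 := S1) (E := F)); [|left; reflexivity|].
      * intros y Hy. destruct (Hback y Hy) as [S0 [E [Hin [HO _]]]]. exists S0, E; auto.
      * apply (ug_step_mono A A [] [x]); auto. intros v [].
    + exact (rec_not_unguarded_in_fresh B x W Hguard rec_x_notin_B HW HWV).
  - apply (block_founded Hb A) with Y; auto. intros y Hy.
    destruct (Hback y Hy) as [S0 [E [Hin [_ [HO|[_ HO]]]]]]; [exists S0, E; auto|contradiction].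
Qed.

Lemma rec_unguarded_reflected A V : A X1 -> ug_closed b' A V ->
  exists W, UGN R W /\ incl W (map inr V).
Proof.
  intros HA HC.
  destruct (rep_unguarded Hrep A (x :: V) HA) as [W [HW HWV]].
  - intros y Hy. destruct (rec_ug_closed_back A V HC y Hy) as [S0 [E [Hin [HO _]]]].
    exists S0, E; auto.
  - exact (rec_unguarded B x Hguard rec_x_notin_B HW HWV).
Qed.

Lemma represents_rec :
  represents X1 (prune (fsubstN (subst1 x S1) S1)) (map (rec_entry x S1 R) tl) x n1 R.
Proof.
  split; [|exact rec_unguarded_reflected].
  pose proof (block_le Hb). split.
  - lia.
  - exact rec_nodup.
  - intros Y HY. rewrite rec_formals in HY. apply (block_range Hb) in HY. lia.
  - exact rec_block_ok.
  - exact rec_solved.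
  - exact rec_founded.
Qed.

End RecCase.

Section Existence.

Definition representable (E : nexp) : Prop :=
  forall n0, expr E -> guardedN E -> (forall v, In v (fvN E) -> v < n0) ->
  exists X S0 tl n1, represents X S0 tl n0 n1 E.

Lemma representsP_exists K : (forall E, sizeN E < K -> representable E) ->
  forall P : pexp, sizeP P <= K -> forall n0, lcP 0 P -> probsP P -> guardedP P ->
  (forall v, In v (fvP P) -> v < n0) -> exists b Ph n1, representsP b n0 n1 P Ph.
Proof.
  intros IH P. induction P as [E|p P IHP Q IHQ]; simpl; intros Hs n0 Hlc Hpr Hg Hfv.
  - destruct (IH E ltac:(lia) n0 (conj Hlc Hpr) Hg Hfv) as [X [S0 [tl [n1 Hrep]]]].
    exists (((X,S0),E)::tl), (PDirac (NFV X)), n1. exact (representsP_dirac Hrep).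
  - destruct Hlc as [HlP HlQ], Hpr as [Hp [HpP HpQ]], Hg as [HgP HgQ].
    destruct (IHP ltac:(lia) n0 HlP HpP HgP) as [b1 [Ph [n1 H1]]].
    { intros v Hv; apply Hfv, in_or_app; auto. }
    assert (Hle : n0 <= n1) by exact (block_le (repP_block H1)).
    destruct (IHQ ltac:(lia) n1 HlQ HpQ HgQ) as [b2 [Qh [n2 H2]]].
    { intros v Hv. enough (v < n0) by lia. apply Hfv, in_or_app; auto. }
    exists (b1 ++ b2), (POplus p Ph Qh), n2. exact (representsP_oplus H1 H2 Hfv Hp).
Qed.

Lemma represents_exists K : forall E : nexp, sizeN E < K -> representable E.
Proof.
  induction K as [|K IHK]; intros E Hs; [lia|].
  intros n0 [Hlc Hpr] Hg Hfv.
  destruct E as [| y | k | a P | B | E F]; simpl in *.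
  - exists n0, NNil, [], (S n0). apply represents_nil.
  - exists n0, (NFV y), [], (S n0). apply represents_fv, Hfv. simpl; auto.
  - lia.
  - destruct (representsP_exists (sizeP P) (fun E HE => IHK E ltac:(lia)) P (le_n _) (S n0)
      Hlc Hpr Hg) as [b [Ph [n1 HP]]].
    { intros v Hv. specialize (Hfv v Hv). lia. }
    exists n0, (NPre a Ph), b, n1. exact (represents_pre a P Ph b n0 n1 HP Hfv Hlc Hpr).
  - destruct Hg as [Hug HgB].
    assert (HxB : ~ In n0 (fvN B)) by (intro H; specialize (Hfv n0 H); lia).
    destruct (IHK (open B (NFV n0))) with (n0 := S n0) as [X [S0 [tl [n1 Hrep]]]].
    + unfold open. rewrite (proj1 (open_size n0)). lia.
    + split; [exact (proj1 (lc_open (NFV n0) I) B 0 Hlc)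
             |exact (proj1 (probs_open (NFV n0) I) B 0 Hpr)].
    + exact (proj1 (guarded_open n0) B 0 HgB HxB).
    + intros v Hv. destruct (proj1 (fv_open _) _ _ _ Hv) as [H|[<-|[]]];
        [specialize (Hfv v H)|]; lia.
    + eexists X, _, _, n1. exact (represents_rec X S0 tl n0 n1 B Hrep Hlc Hpr Hug Hfv).
  - destruct Hlc as [HlE HlF], Hpr as [HpE HpF], Hg as [HgE HgF].
    destruct (IHK E ltac:(lia) (S n0) (conj HlE HpE) HgE) as [X1 [S1 [t1 [n1 H1]]]].
    { intros v Hv. enough (v < n0) by lia. apply Hfv, in_or_app; auto. }
    assert (Hle : S n0 <= n1) by exact (block_le (rep_block H1)).
    destruct (IHK F ltac:(lia) n1 (conj HlF HpF) HgF) as [X2 [S2 [t2 [n2 H2]]]].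
    { intros v Hv. enough (v < n0) by lia. apply Hfv, in_or_app; auto. }
    eexists n0, _, _, n2.
    exact (represents_sum X1 S1 t1 X2 S2 t2 n0 n1 n2 E F H1 H2 Hfv
      (conj (conj HlE HlF) (conj HpE HpF))).
Qed.

End Existence.

End Expressions.

Lemma fresh_bound (l : list nat) : exists n, forall v, In v l -> v < n.
Proof.
  induction l as [|a l [n IH]]; [exists 0; intros v []|].
  exists (S (max a n)). intros v [<-|Hv]; [lia|specialize (IH v Hv); lia].
Qed.

Theorem mainTheorem18 (L : Type) (E : nexp L) :
  expr E -> guardedN E ->
  exists sy : eqsys L,
    sys_wf sy /\ standard sy /\ sys_guarded sy /\
    (forall v, sysVar sy v -> In v (fvN E)) /\
    satisfies E sy.
Proof.
  intros He Hg.
  destruct (fresh_bound (fvN E)) as [n0 Hn0].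
  destruct (represents_exists (S (sizeN E)) E (le_n _) n0 He Hg Hn0)
    as [X [S0 [tl [n1 [Hb _]]]]].
  assert (Hwf := block_sys_wf Hb ltac:(discriminate)).
  assert (Hstd := block_standard Hb).
  exists (sys_of (((X,S0),E)::tl)).
  split; [exact Hwf|split; [exact Hstd|split; [|split]]].
  - exact (sys_guarded_of_tau_founded _ Hwf Hstd (block_founded Hb)).
  - intros v Hv. exact (block_sysVar Hb Hv).
  - exact (block_satisfies Hb).
Qed.
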